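(* Let $0<\mu_1<\mu_2$, $\alpha\in(0,1)$, $\delta\ge0$, $\sigma\in(0,1/2)$. Let $c_0:[0,+\infty)\to(0,+\infty)$ be of class $C^3$ with $\mu_1\le c_0(t)\le\mu_2$ for all $t\ge0$ and $$\sup_{t\ge0}\big(|c_0'(t)|+|c_0''(t)|+|c_0'''(t)|\big)<+\infty.$$ Let $\{\lambda_n\},\{\varepsilon_n\}$ be sequences of positive reals with $\lambda_n\to+\infty$, $\varepsilon_n\to0$, and $\limsup_{n\to\infty}\varepsilon_n\lambda_n^\alpha<+\infty$. Define $c_n(t):=\gamma(\varepsilon_n,\lambda_n,t)$, where $$\gamma(\varepsilon,\lambda,t):=c_0(t)-\varepsilon\sin(2a)-\frac{\varepsilon^2}{4}\frac{\sin^4 a}{c_0(t)}-\frac{5}{16\lambda^2}\Big[\frac{c_0'(t)}{c_0(t)}\Big]^2+\frac{\varepsilon}{2\lambda}\frac{c_0'(t)}{c_0(t)^{3/2}}\sin^2 a+\frac{1}{4\lambda^2}\frac{c_0''(t)}{c_0(t)}+\frac{\delta^2}{\lambda^{2-4\sigma}},\quad a=a(\lambda,t):=\lambda\int_0^tc_0(s)^{1/2}ds,$$ and let $w_n$ be the solution of $w_n''+2\delta\lambda_n^{2\sigma}w_n'+\lambda_n^2c_n(t)w_n=0$ on $[0,+\infty)$ with $w_n(0)=0$, $w_n'(0)=1$. Set $$\mu_3:=\frac{\mu_1\min\{1,\mu_1\}}{2\mu_2^2},\qquad\mu_4:=\frac{1}{4\mu_2^{1/2}}.$$ Then: (i) $c_n\to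 c_0$ uniformly on $[0,+\infty)$; (ii) $\displaystyle\limsup_{n\to\infty}\operatorname{Hold}_\alpha(c_n)\le\max\Big\{\operatorname{Hold}_\alpha(c_0),\ 2\mu_2^{\alpha/2}\limsup_{n\to\infty}(\varepsilon_n\lambda_n^\alpha)\Big\}$; (iii) for every $n$ large enough, $$|w_n'(t)|^2+\lambda_n^2|w_n(t)|^2\ge\mu_3\exp\big(\mu_4\varepsilon_n\lambda_n t-2\delta\lambda_n^{2\sigma}t\big)\qquad\forall t\ge0.$$
   Context: For $c:[0,+\infty)\to\mathbb{R}$, $\operatorname{Hold}_\alpha(c):=\sup\{|c(t)-c(s)|/|t-s|^\alpha:\ t,s\ge0,\ t\neq s\}$. *)

From Stdlib Require Import Reals Lra.
Open Scope R_scope.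

Definition deriv_nonneg (f : R -> R) (t l : R) : Prop :=
  forall eps : R, 0 < eps -> exists delta : R, 0 < delta /\
    forall h : R, h <> 0 -> 0 <= t + h -> Rabs h < delta ->
      Rabs ((f (t + h) - f t) / h - l) < eps.

Definition cont_nonneg (f : R -> R) (t : R) : Prop :=
  forall eps : R, 0 < eps -> exists delta : R, 0 < delta /\
    forall s : R, 0 <= s -> Rabs (s - t) < delta -> Rabs (f s - f t) < eps.

(* The set of difference quotients whose supremum is Hold_alpha(c). *)
Definition Hold_set (alpha : R) (c : R -> R) (x : R) : Prop :=
  exists t s : R, 0 <= t /\ 0 <= s /\ t <> s /\
    x = Rabs (c t - c s) / Rpower (Rabs (t - s)) alpha.

Definition is_limsup (u : nat -> R) (L : R) : Prop :=
  forall eta : R, 0 < eta ->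
    (exists N : nat, forall n : nat, (N <= n)%nat -> u n <= L + eta) /\
    (forall N : nat, exists n : nat, (N <= n)%nat /\ L - eta <= u n).

(* gamma(eps, lam, t), with c1 = c0', c2 = c0'', and A t = int_0^t c0(s)^{1/2} ds,
   so a(lam, t) = lam * A t. *)
Definition gamma (c0 c1 c2 A : R -> R) (delta sigma eps lam t : R) : R :=
  let a := lam * A t in
  c0 t - eps * sin (2 * a)
  - eps ^ 2 / 4 * (sin a ^ 4 / c0 t)
  - 5 / (16 * lam ^ 2) * (c1 t / c0 t) ^ 2
  + eps / (2 * lam) * (c1 t / (c0 t * sqrt (c0 t))) * sin a ^ 2
  + 1 / (4 * lam ^ 2) * (c2 t / c0 t)
  + delta ^ 2 / Rpower lam (2 - 4 * sigma).

(* The three claims rest on one observation: [gamma] is tailored so that the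
   WKB function
     y(t) = exp(u(t)) sin(a(t)) / (lam c0(0)^(1/4) c0(t)^(1/4)),
     u(t) = (eps lam / 2) int_0^t sin^2(a) / sqrt c0 - delta lam^(2 sigma) t,
   solves [y'' + 2 delta lam^(2 sigma) y' + lam^2 gamma y = 0] exactly, with
   [y(0) = 0], [y'(0) = 1]; by uniqueness [w_n = y].  Since [sin^2] averages to
   [1/2], [u(t) >= eps lam t / (4 sqrt mu2) - O(eps) - delta lam^(2 sigma) t], and
   the energy [y'^2 + lam^2 y^2] is comparable to [exp(2u)], which gives (iii).
   (i) is the observation that all the correction terms of [gamma - c0] are
   [O(eps + 1/lam + lam^(4 sigma - 2))].  For (ii), the only correction whose
   Hoelder quotient is not [o(1)] is [eps sin(2a)]; interpolating between its sup
   bound [2] and its Lipschitz bound [2 lam sqrt mu2] bounds that quotient by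
   [2 mu2^(alpha/2) eps lam^alpha].  At small scales the quotient of the
   Lipschitz [c0] is small, at large scales that of [eps sin(2a)] is, so at each
   scale only one of the two terms of the max is needed. *)

From Stdlib Require Import Reals Lra Psatz.
From Coquelicot Require Import Coquelicot.
Open Scope R_scope.

Local Notation dpl := derivable_pt_lim.

(** * Derivatives on [0, +oo) *)

(* A one-sided derivative at 0 becomes a two-sided one once f is continued
   to the left of 0 by its tangent line. *)
Definition tangent_ext (f : R -> R) (l0 t : R) : R :=
  if Rle_dec 0 t then f t else f 0 + l0 * t.

Lemma tangent_ext_id f l0 t : 0 <= t -> tangent_ext f l0 t = f t.
Proof. intros Ht; unfold tangent_ext; destruct (Rle_dec 0 t); [reflexivity|lra]. Qed.

Lemma dpl_tangent_ext f f' :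
  (forall t, 0 <= t -> deriv_nonneg f t (f' t)) ->
  forall t, 0 <= t -> dpl (tangent_ext f (f' 0)) t (f' t).
Proof.
  intros Hd t Ht eps Heps. destruct (Hd t Ht eps Heps) as [del [Hdel H]].
  destruct (Rle_lt_or_eq_dec 0 t Ht) as [Hp|<-].
  - assert (Hm : 0 < Rmin del t) by (apply Rmin_pos; lra).
    exists (mkposreal _ Hm). intros h Hh Hlt. simpl in Hlt.
    pose proof (Rmin_l del t). pose proof (Rmin_r del t).
    pose proof (Rabs_def2 _ _ Hlt).
    rewrite !tangent_ext_id by lra. apply H; auto; lra.
  - exists (mkposreal _ Hdel). intros h Hh Hlt. simpl in Hlt.
    destruct (Rle_dec 0 h).
    + rewrite !tangent_ext_id by lra. apply H; auto; lra.
    + unfold tangent_ext. destruct (Rle_dec 0 (0 + h)); [lra|].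
      destruct (Rle_dec 0 0); [|lra].
      replace ((f 0 + f' 0 * (0 + h) - f 0) / h - f' 0) with 0 by (field; auto).
      rewrite Rabs_R0; lra.
Qed.

Lemma deriv_nonneg_dpl f t l : dpl f t l -> deriv_nonneg f t l.
Proof.
  intros H eps Heps. destruct (H eps Heps) as [del Hd].
  exists del. split; [apply cond_pos|]. intros h Hh _ Hl. apply Hd; auto.
Qed.

Lemma deriv_nonneg_minus f g t a b : deriv_nonneg f t a -> deriv_nonneg g t b ->
  deriv_nonneg (fun s => f s - g s) t (a - b).
Proof.
  intros Hf Hg eps Heps.
  destruct (Hf (eps/2) ltac:(lra)) as [d1 [Hd1 H1]].
  destruct (Hg (eps/2) ltac:(lra)) as [d2 [Hd2 H2]].
  exists (Rmin d1 d2). split; [apply Rmin_pos; auto|].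
  intros h Hh Hp Hl. pose proof (Rmin_l d1 d2). pose proof (Rmin_r d1 d2).
  specialize (H1 h Hh Hp ltac:(lra)). specialize (H2 h Hh Hp ltac:(lra)).
  replace ((f (t + h) - g (t + h) - (f t - g t)) / h - (a - b)) with
    (((f (t + h) - f t) / h - a) - ((g (t + h) - g t) / h - b)) by (field; auto).
  eapply Rle_lt_trans; [apply Rabs_triang|]. rewrite Rabs_Ropp. lra.
Qed.

Lemma dpl_nonneg_ge_at_0 F F' : (forall t, 0 <= t -> dpl F t (F' t)) ->
  (forall t, 0 <= t -> 0 <= F' t) -> forall t, 0 <= t -> F 0 <= F t.
Proof.
  intros Hd Hp t Ht. destruct (Rle_lt_or_eq_dec 0 t Ht) as [H|<-]; [|lra].
  destruct (MVT_cor2 F F' 0 t H) as [c [Hc Hc2]]; [intros c Hc; apply Hd; lra|].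
  assert (0 <= F' c * (t - 0)) by (apply Rmult_le_pos; [apply Hp|]; lra). lra.
Qed.

Lemma lipschitz_of_deriv_bound F F' B :
  (forall t, 0 <= t -> deriv_nonneg F t (F' t)) ->
  (forall t, 0 <= t -> Rabs (F' t) <= B) ->
  forall t s, 0 <= t -> 0 <= s -> Rabs (F t - F s) <= B * Rabs (t - s).
Proof.
  intros Hd Hb.
  set (G := tangent_ext F (F' 0)).
  assert (K : forall t s, 0 <= s -> s < t -> Rabs (F t - F s) <= B * Rabs (t - s)).
  { intros t s Hs Hst.
    destruct (MVT_cor2 G F' s t Hst) as [c [Hc Hc2]].
    { intros c Hc. apply dpl_tangent_ext; auto; lra. }
    unfold G in Hc. rewrite !tangent_ext_id in Hc by lra.
    rewrite Hc, Rabs_mult. apply Rmult_le_compat_r; [apply Rabs_pos|]. apply Hb; lra. }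
  intros t s Ht Hs. destruct (Rtotal_order s t) as [H|[<-|H]].
  - auto.
  - rewrite !Rminus_eq_0, Rabs_R0. pose proof (Hb s Hs). pose proof (Rabs_pos (F' s)). nra.
  - rewrite (Rabs_minus_sym (F t)), (Rabs_minus_sym t). auto.
Qed.

Lemma dpl_eq f x l l' : dpl f x l -> l = l' -> dpl f x l'.
Proof. now intros H <-. Qed.
Lemma dpl_const c x : dpl (fun _ => c) x 0.
Proof. apply derivable_pt_lim_const. Qed.
Lemma dpl_id x : dpl (fun t => t) x 1.
Proof. apply derivable_pt_lim_id. Qed.
Lemma dpl_plus f g x a b : dpl f x a -> dpl g x b -> dpl (fun t => f t + g t) x (a + b).
Proof. apply (derivable_pt_lim_plus f g). Qed.
Lemma dpl_minus f g x a b : dpl f x a -> dpl g x b -> dpl (fun t => f t - g t) x (a - b).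
Proof. apply (derivable_pt_lim_minus f g). Qed.
Lemma dpl_opp f x a : dpl f x a -> dpl (fun t => - f t) x (- a).
Proof. apply (derivable_pt_lim_opp f). Qed.
Lemma dpl_mult f g x a b : dpl f x a -> dpl g x b ->
  dpl (fun t => f t * g t) x (a * g x + f x * b).
Proof. apply (derivable_pt_lim_mult f g). Qed.
Lemma dpl_comp f g x a b : dpl f x a -> dpl g (f x) b -> dpl (fun t => g (f t)) x (b * a).
Proof. apply (derivable_pt_lim_comp f g). Qed.
Lemma dpl_sin f x a : dpl f x a -> dpl (fun t => sin (f t)) x (cos (f x) * a).
Proof. intros; apply (dpl_comp f sin); auto. apply derivable_pt_lim_sin. Qed.
Lemma dpl_cos f x a : dpl f x a -> dpl (fun t => cos (f t)) x (- sin (f x) * a).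
Proof. intros; apply (dpl_comp f cos); auto. apply derivable_pt_lim_cos. Qed.
Lemma dpl_exp f x a : dpl f x a -> dpl (fun t => exp (f t)) x (exp (f x) * a).
Proof. intros; apply (dpl_comp f exp); auto. apply derivable_pt_lim_exp. Qed.
Lemma dpl_sqrt f x a : 0 < f x -> dpl f x a ->
  dpl (fun t => sqrt (f t)) x (/ (2 * sqrt (f x)) * a).
Proof. intros; apply (dpl_comp f sqrt); auto. apply derivable_pt_lim_sqrt; auto. Qed.
Lemma dpl_div f g x a b : g x <> 0 -> dpl f x a -> dpl g x b ->
  dpl (fun t => f t / g t) x ((a * g x - b * f x) / (g x) ^ 2).
Proof.
  intros Hg Hfa Hgb. eapply dpl_eq; [exact (derivable_pt_lim_div f g x a b Hfa Hgb Hg)|].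
  unfold Rsqr; field; auto.
Qed.
Lemma dpl_pow f x a n : dpl f x a -> dpl (fun t => f t ^ n) x (INR n * f x ^ (pred n) * a).
Proof. intros. apply (dpl_comp f (fun y => y ^ n)); auto. apply derivable_pt_lim_pow. Qed.

Lemma dpl_scal c x : dpl (Rmult c) x c.
Proof.
  eapply dpl_eq; [apply (dpl_mult (fun _ => c) (fun t => t)); [apply dpl_const|apply dpl_id]|].
  ring.
Qed.

Ltac dpl_rec :=
  match goal with
  | |- dpl (fun _ => ?c) _ _ => apply dpl_const
  | |- dpl (fun t => t) _ _ => apply dpl_id
  | |- dpl (Rmult _) _ _ => apply dpl_scal
  | |- dpl (fun t => _ + _) _ _ => apply dpl_plus; dpl_rec
  | |- dpl (fun t => _ - _) _ _ => apply dpl_minus; dpl_rec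
  | |- dpl (fun t => - _) _ _ => apply dpl_opp; dpl_rec
  | |- dpl (fun t => _ / _) _ _ => apply dpl_div; [ | dpl_rec | dpl_rec ]
  | |- dpl (fun t => _ * _) _ _ => apply dpl_mult; dpl_rec
  | |- dpl (fun t => sin _) _ _ => apply dpl_sin; dpl_rec
  | |- dpl (fun t => cos _) _ _ => apply dpl_cos; dpl_rec
  | |- dpl (fun t => exp _) _ _ => apply dpl_exp; dpl_rec
  | |- dpl (fun t => sqrt _) _ _ => apply dpl_sqrt; [ | dpl_rec ]
  | |- dpl (fun t => _ ^ _) _ _ => apply dpl_pow; dpl_rec
  | H : forall t, 0 <= t -> dpl ?F t _ |- dpl ?F _ _ => apply H; try assumption
  | _ => idtac
  end.

Ltac derive := eapply dpl_eq; [dpl_rec | ]; cbv beta.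

Lemma antiderivative_continuous (G : R -> R) :
  (forall u, 0 <= u -> continuity_pt G u) ->
  exists Phi : R -> R, Phi 0 = 0 /\ forall t, 0 <= t -> dpl Phi t (G t).
Proof.
  intros HG. set (g := fun s => G (Rabs s)).
  assert (Hg : forall s, continuous g s).
  { intros s. apply continuity_pt_filterlim, (continuity_pt_comp Rabs G).
    - apply Rcontinuity_abs.
    - apply HG, Rabs_pos. }
  exists (fun t => RInt g 0 t). split; [exact (RInt_point 0 g)|].
  intros t Ht. apply is_derive_Reals.
  replace (G t) with (g t) by (unfold g; rewrite Rabs_pos_eq; auto).
  apply (is_derive_RInt g (fun b => RInt g 0 b) 0 t); auto.
  apply filter_forall. intros b.
  exact (RInt_correct g 0 b (ex_RInt_continuous g 0 b (fun z _ => Hg z))).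
Qed.

Lemma exp_le_compat x y : x <= y -> exp x <= exp y.
Proof. intros [H|<-]; [left; apply exp_increasing|right]; auto. Qed.

Lemma sin_lipschitz x y : Rabs (sin x - sin y) <= Rabs (x - y).
Proof.
  assert (K : forall x y, y < x -> Rabs (sin x - sin y) <= Rabs (x - y)).
  { intros u v Huv. destruct (MVT_cor2 sin cos v u Huv) as [c [Hc _]].
    { intros; apply derivable_pt_lim_sin. }
    rewrite Hc, Rabs_mult. pose proof (COS_bound c). pose proof (Rabs_pos (u - v)).
    assert (Rabs (cos c) <= 1) by (apply Rabs_le; lra). nra. }
  destruct (Rtotal_order x y) as [H|[H|H]].
  - rewrite (Rabs_minus_sym (sin x)), (Rabs_minus_sym x). auto.
  - subst. rewrite !Rminus_diag, Rabs_R0. lra.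
  - auto.
Qed.

Lemma Rabs_div_le x y X Y : Rabs x <= X -> 0 < Y -> Y <= y -> Rabs (x / y) <= X / Y.
Proof.
  intros H1 H2 H3. unfold Rdiv. rewrite Rabs_mult, Rabs_inv, (Rabs_pos_eq y) by lra.
  pose proof (Rabs_pos x).
  apply Rmult_le_compat; auto; [left; apply Rinv_0_lt_compat; lra|].
  apply Rinv_le_contravar; lra.
Qed.

Lemma Rabs_mult_le x y X Y : Rabs x <= X -> Rabs y <= Y -> Rabs (x * y) <= X * Y.
Proof.
  intros. rewrite Rabs_mult. pose proof (Rabs_pos x). pose proof (Rabs_pos y).
  apply Rmult_le_compat; auto.
Qed.

Lemma Rabs_sin_le x : Rabs (sin x) <= 1.
Proof. apply Rabs_le, SIN_bound. Qed.

Lemma Rabs_pow_le x X n : Rabs x <= X -> Rabs (x ^ n) <= X ^ n.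
Proof. intros. rewrite <- RPow_abs. apply pow_incr. split; auto. apply Rabs_pos. Qed.

Lemma young_abs g v w M : Rabs g <= M -> 2 * g * v * w <= M * (v ^ 2 + w ^ 2).
Proof.
  intros H. assert (2 * g * v * w <= Rabs g * (v ^ 2 + w ^ 2)).
  { destruct (Rle_dec 0 g).
    - rewrite Rabs_pos_eq by lra. pose proof (pow2_ge_0 (v - w)). nra.
    - rewrite Rabs_left by lra. pose proof (pow2_ge_0 (v + w)). nra. }
  pose proof (pow2_ge_0 v); pose proof (pow2_ge_0 w). nra.
Qed.

Lemma Rpower_pos x y : 0 < Rpower x y.
Proof. apply exp_pos. Qed.

Lemma Rpower_root x y : 0 < x -> 0 < y -> Rpower (Rpower x (1 / y)) y = x.
Proof.
  intros Hx Hy. rewrite Rpower_mult. replace (1 / y * y) with 1 by (field; lra).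
  apply Rpower_1; auto.
Qed.

Lemma Rpower_inv x y : 0 < x -> Rpower (/ x) y = / Rpower x y.
Proof. intros. unfold Rpower. rewrite ln_Rinv by auto. rewrite <- exp_Ropp. f_equal. ring. Qed.

Lemma Rpower_div h al : 0 < h -> h / Rpower h al = Rpower h (1 - al).
Proof.
  intros. replace (1 - al) with (1 + - al) by ring.
  rewrite Rpower_plus, Rpower_1, Rpower_Ropp by auto. reflexivity.
Qed.

Lemma Rpower_damping_sq lam delta sigma : 0 < lam ->
  (delta * Rpower lam (2 * sigma)) ^ 2 / lam ^ 2 = delta ^ 2 / Rpower lam (2 - 4 * sigma).
Proof.
  intros Hl.
  replace (lam ^ 2) with (Rpower lam (2 - 4 * sigma) * (Rpower lam (2 * sigma)
                                                       * Rpower lam (2 * sigma))).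
  - pose proof (Rpower_pos lam (2 - 4 * sigma)). pose proof (Rpower_pos lam (2 * sigma)).
    field. split; lra.
  - rewrite <- !Rpower_plus. replace (2 - 4 * sigma + (2 * sigma + 2 * sigma)) with (INR 2)
      by (simpl; ring).
    apply Rpower_pow; auto.
Qed.

Lemma Rpower_sublinear delta p : 0 <= delta -> p < 1 ->
  exists M, 0 < M /\ forall l, M < l -> delta * Rpower l p <= l / 5.
Proof.
  intros Hd Hp. set (M := Rpower (5 * delta + 1) (1 / (1 - p))).
  exists M. split; [apply Rpower_pos|]. intros l Hl.
  assert (HM : 0 < M) by apply Rpower_pos.
  assert (H1 : Rpower M (1 - p) = 5 * delta + 1) by (apply Rpower_root; lra).
  assert (H2 : Rpower M (1 - p) < Rpower l (1 - p)) by (apply Rlt_Rpower_l; lra).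
  assert (H3 : l = Rpower l p * Rpower l (1 - p)).
  { rewrite <- Rpower_plus. replace (p + (1 - p)) with 1 by ring. rewrite Rpower_1; lra. }
  pose proof (Rpower_pos l p).
  rewrite H3 at 2. nra.
Qed.

Lemma Rpower_inv_small delta q : 0 < q -> forall eta, 0 < eta ->
  exists L, 0 < L /\ forall l, L < l -> delta ^ 2 / Rpower l q < eta.
Proof.
  intros Hq eta Heta.
  set (X := delta ^ 2 / eta + 1).
  assert (HX : 0 < X) by (pose proof (pow2_ge_0 delta);
    assert (0 <= delta ^ 2 / eta) by (apply Rdiv_le_0_compat; lra); unfold X; lra).
  exists (Rpower X (1 / q)). split; [apply Rpower_pos|].
  intros l Hl.
  assert (H2 : X < Rpower l q).
  { rewrite <- (Rpower_root X q) by lra.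
    apply Rlt_Rpower_l; [lra|]. split; [apply Rpower_pos|auto]. }
  pose proof (Rpower_pos l q).
  apply (Rmult_lt_reg_r (Rpower l q)); auto.
  replace (delta ^ 2 / Rpower l q * Rpower l q) with (delta ^ 2) by (field; lra).
  assert (eta * X = delta ^ 2 + eta) by (unfold X; field; lra).
  nra.
Qed.

(** * The explicit solution *)

(* The explicit solution is built for an arbitrary damping [d], for which the
   last summand of [gamma] becomes [k = d^2 / lam^2]. *)
Definition gamma_c (c0 c1 c2 A : R -> R) (eps lam k t : R) : R :=
  let a := lam * A t in
  c0 t - eps * sin (2 * a)
  - eps ^ 2 / 4 * (sin a ^ 4 / c0 t)
  - 5 / (16 * lam ^ 2) * (c1 t / c0 t) ^ 2
  + eps / (2 * lam) * (c1 t / (c0 t * sqrt (c0 t))) * sin a ^ 2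
  + 1 / (4 * lam ^ 2) * (c2 t / c0 t)
  + k.

Lemma gamma_gamma_c c0 c1 c2 A delta sigma eps lam t :
  gamma c0 c1 c2 A delta sigma eps lam t =
  gamma_c c0 c1 c2 A eps lam (delta ^ 2 / Rpower lam (2 - 4 * sigma)) t.
Proof. reflexivity. Qed.

(* The energy lower bound for [y' = E / (N p) * (lam p^2 C + S r)],
   [y = E / (N p) * S] with [S = sin a], [C = cos a]. *)
Lemma wkb_energy_lower lam p S C r m : 0 < lam -> S ^ 2 + C ^ 2 = 1 ->
  r ^ 2 <= 9 * lam ^ 2 / 25 -> 0 < m <= 1 -> m <= p ^ 4 ->
  lam ^ 2 / 2 * m <= (lam * p ^ 2 * C + S * r) ^ 2 + lam ^ 2 * S ^ 2.
Proof.
  intros Hl HSC Hr Hm Hp.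
  set (x := lam * p ^ 2 * C). set (z := S * r).
  assert (Q1 : (x + z) ^ 2 >= x ^ 2 / 2 - z ^ 2) by (pose proof (pow2_ge_0 (x + 2 * z)); nra).
  assert (Q2 : z ^ 2 <= S ^ 2 * (9 * lam ^ 2 / 25)).
  { unfold z. rewrite Rpow_mult_distr. apply Rmult_le_compat_l; [apply pow2_ge_0|auto]. }
  assert (Q3 : lam ^ 2 * m * C ^ 2 <= x ^ 2).
  { replace (x ^ 2) with (lam ^ 2 * p ^ 4 * C ^ 2) by (unfold x; ring).
    apply Rmult_le_compat_r; [apply pow2_ge_0|].
    apply Rmult_le_compat_l; [apply pow2_ge_0|lra]. }
  assert (0 <= lam ^ 2 * S ^ 2) by (apply Rmult_le_pos; apply pow2_ge_0).
  assert (0 <= lam ^ 2 * C ^ 2) by (apply Rmult_le_pos; apply pow2_ge_0).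
  assert (lam ^ 2 * m * S ^ 2 <= lam ^ 2 * S ^ 2) by nra.
  nra.
Qed.

(* The drift of the averaging argument: [lam / (2 sqrt c0) >= lam / (2 sqrt mu2)]
   beats the error [c0' sin(2a) / (4 c0^2)] once [lam] is large. *)
Lemma averaging_drift_nonneg mu1 mu2 K lam q g :
  0 < mu1 -> 0 < q <= sqrt mu2 -> mu1 ^ 2 <= q ^ 4 -> Rabs g <= K ->
  K * sqrt mu2 <= lam * mu1 ^ 2 ->
  0 <= lam / (2 * q) - g / (4 * q ^ 4) - lam / (4 * sqrt mu2).
Proof.
  intros Hmu1 Hq Hq4 Hg HlamK.
  assert (Hs2 : 0 < sqrt mu2) by lra.
  assert (Hm : 0 < mu1 ^ 2) by (apply pow_lt; lra).
  assert (HK : 0 <= K) by (pose proof (Rabs_pos g); lra).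
  assert (Hlam : 0 <= lam) by nra.
  assert (T1 : lam / (2 * sqrt mu2) <= lam / (2 * q)).
  { apply Rmult_le_compat_l; [lra|]. apply Rinv_le_contravar; lra. }
  assert (T2 : g / (4 * q ^ 4) <= K / (4 * mu1 ^ 2)).
  { apply (Rle_trans _ (K / (4 * q ^ 4))).
    - apply Rmult_le_compat_r; [left; apply Rinv_0_lt_compat; lra|].
      pose proof (Rle_abs g); lra.
    - apply Rmult_le_compat_l; [lra|]. apply Rinv_le_contravar; lra. }
  assert (T3 : K / (4 * mu1 ^ 2) <= lam / (4 * sqrt mu2)).
  { apply (Rmult_le_reg_r (4 * mu1 ^ 2 * sqrt mu2)); [nra|].
    replace (K / (4 * mu1 ^ 2) * (4 * mu1 ^ 2 * sqrt mu2)) with (K * sqrt mu2) by (field; lra).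
    replace (lam / (4 * sqrt mu2) * (4 * mu1 ^ 2 * sqrt mu2)) with (lam * mu1 ^ 2)
      by (field; lra).
    lra. }
  assert (lam / (2 * sqrt mu2) = 2 * (lam / (4 * sqrt mu2))) by (field; lra).
  assert (0 <= lam / (4 * sqrt mu2)) by (apply Rdiv_le_0_compat; lra).
  lra.
Qed.

Section ExplicitSolution.
Variables (mu1 mu2 : R) (c0 c1 c2 A : R -> R).
Hypothesis Hmu1 : 0 < mu1.
Hypothesis Hc1 : forall t, 0 <= t -> deriv_nonneg c0 t (c1 t).
Hypothesis Hc2 : forall t, 0 <= t -> deriv_nonneg c1 t (c2 t).
Hypothesis HA : forall t, 0 <= t -> deriv_nonneg A t (sqrt (c0 t)).
Hypothesis HA0 : A 0 = 0.
Hypothesis Hbnd : forall t, 0 <= t -> mu1 <= c0 t <= mu2.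

Let c0x := tangent_ext c0 (c1 0).
Let c1x := tangent_ext c1 (c2 0).
Let Ax := tangent_ext A (sqrt (c0 0)).

(* Found in the context by [dpl_rec]. *)
Let dpl_c0x : forall t, 0 <= t -> dpl c0x t (c1 t).
Proof. exact (dpl_tangent_ext c0 c1 Hc1). Qed.
Let dpl_c1x : forall t, 0 <= t -> dpl c1x t (c2 t).
Proof. exact (dpl_tangent_ext c1 c2 Hc2). Qed.
Let dpl_Ax : forall t, 0 <= t -> dpl Ax t (sqrt (c0 t)).
Proof. exact (dpl_tangent_ext A (fun t => sqrt (c0 t)) HA). Qed.

Let c0x_pos t : 0 <= t -> 0 < c0x t.
Proof. intros Ht. unfold c0x. rewrite tangent_ext_id by auto. pose proof (Hbnd t Ht); lra. Qed.

Definition root4 t := sqrt (sqrt (c0x t)).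

Lemma root4_pos t : 0 <= t -> 0 < root4 t.
Proof. intros. apply sqrt_lt_R0, sqrt_lt_R0, c0x_pos; auto. Qed.

Lemma root4_sq t : 0 <= t -> sqrt (c0 t) = root4 t ^ 2.
Proof.
  intros Ht. unfold root4. simpl. rewrite Rmult_1_r, sqrt_sqrt.
  - unfold c0x. rewrite tangent_ext_id; auto.
  - apply sqrt_pos.
Qed.

Lemma root4_pow4 t : 0 <= t -> c0 t = root4 t ^ 4.
Proof.
  intros Ht. replace (root4 t ^ 4) with ((root4 t ^ 2) ^ 2) by ring.
  rewrite <- root4_sq by auto. simpl. rewrite Rmult_1_r, sqrt_sqrt; auto.
  pose proof (Hbnd t Ht); lra.
Qed.

Lemma root4_sq_bounds t : 0 <= t -> sqrt mu1 <= root4 t ^ 2 <= sqrt mu2.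
Proof.
  intros Ht. rewrite <- root4_sq by auto. pose proof (Hbnd t Ht).
  split; apply sqrt_le_1_alt; lra.
Qed.

Lemma dpl_root4 : forall t, 0 <= t -> dpl root4 t (c1 t / (4 * root4 t ^ 3)).
Proof.
  intros t Ht. unfold root4. derive; try (apply c0x_pos; auto).
  - apply sqrt_lt_R0, c0x_pos; auto.
  - fold (root4 t). replace (sqrt (c0x t)) with (root4 t ^ 2).
    + pose proof (root4_pos t Ht). field. lra.
    + rewrite <- root4_sq by auto. unfold c0x. rewrite tangent_ext_id; auto.
Qed.

Section Phase.
Variables (lam eps d : R).
Hypothesis Hlam : 0 < lam.

Definition phase t := lam * Ax t.

Lemma phase_0 : phase 0 = 0.
Proof. unfold phase, Ax. rewrite tangent_ext_id, HA0 by lra. ring. Qed.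

Lemma dpl_phase : forall t, 0 <= t -> dpl phase t (lam * root4 t ^ 2).
Proof. intros t Ht. unfold phase. derive. rewrite root4_sq by auto. ring. Qed.

Lemma averaging_integrand_continuous :
  forall t, 0 <= t -> continuity_pt (fun t => sin (phase t) ^ 2 / root4 t ^ 2) t.
Proof.
  intros t Ht. apply derivable_continuous_pt. eexists. unfold derivable_pt_abs.
  dpl_rec; try (apply dpl_phase; auto); try (apply dpl_root4; auto).
  apply pow_nonzero. pose proof (root4_pos t Ht). lra.
Qed.

Section WKB.
(* With [Phi' = sin(a)^2 / sqrt c0], [y] is the WKB function of the header. *)
Variable Phi : R -> R.
Hypothesis HPhi0 : Phi 0 = 0.
Hypothesis HPhi : forall t, 0 <= t -> dpl Phi t (sin (phase t) ^ 2 / root4 t ^ 2).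

Definition amplitude_exponent t := eps * lam / 2 * Phi t - d * t.

Lemma dpl_amplitude_exponent : forall t, 0 <= t ->
  dpl amplitude_exponent t (eps * lam * sin (phase t) ^ 2 / (2 * root4 t ^ 2) - d).
Proof.
  intros t Ht. unfold amplitude_exponent. derive; try assumption.
  pose proof (root4_pos t Ht). field. lra.
Qed.

Definition norm_const := lam * root4 0.

Lemma norm_const_pos : 0 < norm_const.
Proof. unfold norm_const. pose proof (root4_pos 0 (Rle_refl 0)). nra. Qed.

Definition y t := exp (amplitude_exponent t) * sin (phase t) / (norm_const * root4 t).

Definition y1 t := exp (amplitude_exponent t) / (norm_const * root4 t) *
  (lam * root4 t ^ 2 * cos (phase t) +
   sin (phase t) * (eps * lam * sin (phase t) ^ 2 / (2 * root4 t ^ 2) - d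
                    - c1x t / (4 * root4 t ^ 4))).

Lemma y_0 : y 0 = 0.
Proof. unfold y. rewrite phase_0, sin_0. unfold Rdiv. ring. Qed.

Lemma y1_0 : y1 0 = 1.
Proof.
  unfold y1. rewrite phase_0, sin_0, cos_0. unfold amplitude_exponent. rewrite HPhi0.
  replace (eps * lam / 2 * 0 - d * 0) with 0 by ring. rewrite exp_0.
  unfold norm_const. pose proof (root4_pos 0 (Rle_refl 0)). field. lra.
Qed.

Lemma dpl_y : forall t, 0 <= t -> dpl y t (y1 t).
Proof.
  intros t Ht. unfold y. pose proof (root4_pos t Ht). pose proof norm_const_pos.
  derive; try (apply dpl_phase; auto); try (apply dpl_root4; auto);
    try (apply dpl_amplitude_exponent; auto).
  - apply Rgt_not_eq. nra.
  - unfold y1, c1x. rewrite tangent_ext_id by auto. field. lra.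
Qed.

Lemma dpl_y1 : forall t, 0 <= t ->
  dpl y1 t (- (2 * d * y1 t + lam ^ 2 * gamma_c c0 c1 c2 A eps lam (d ^ 2 / lam ^ 2) t * y t)).
Proof.
  intros t Ht. unfold y1. pose proof (root4_pos t Ht). pose proof norm_const_pos.
  derive; try (apply dpl_phase; auto); try (apply dpl_root4; auto);
    try (apply dpl_amplitude_exponent; auto).
  all: try (apply Rgt_not_eq; nra).
  all: try (apply pow_nonzero; lra).
  all: try (apply Rmult_integral_contrapositive_currified; [lra|apply pow_nonzero; lra]).
  unfold gamma_c, y. cbv zeta. unfold c1x. rewrite tangent_ext_id by auto.
  replace (lam * A t) with (phase t) by (unfold phase, Ax; rewrite tangent_ext_id; auto).
  rewrite root4_sq, root4_pow4, sin_2a by auto.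
  replace (INR 2) with 2 by (simpl; lra). replace (INR 4) with 4 by (simpl; lra). simpl pred.
  field. lra.
Qed.

Hypothesis Heps : 0 < eps.
Variable K : R.
Hypothesis HK1 : forall t, 0 <= t -> Rabs (c1 t) <= K.
Hypothesis HlamK : K * sqrt mu2 <= lam * mu1 ^ 2.

(* [Phi t >= t / (2 sqrt mu2) - O(1 / lam)]: the mean of [sin^2] is [1/2], and
   [eps sin(2a) / (4 c0)] is the correction that makes this exact. *)
Lemma Phi_lower : forall t, 0 <= t ->
  1 / (4 * sqrt mu2) * eps * lam * t - eps / (4 * mu1) <= eps * lam * Phi t.
Proof.
  set (H := fun t => eps * lam * Phi t + eps * sin (2 * phase t) / (4 * c0x t)
                     - 1 / (4 * sqrt mu2) * eps * lam * t).
  assert (Hs2 : 0 < sqrt mu2) by (apply sqrt_lt_R0; pose proof (Hbnd 0 (Rle_refl 0)); lra).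
  assert (Hm : forall t, 0 <= t -> H 0 <= H t).
  { apply (dpl_nonneg_ge_at_0 H (fun t =>
      eps * (lam / (2 * root4 t ^ 2) - c1 t * sin (2 * phase t) / (4 * (root4 t ^ 2) ^ 4)
             - lam / (4 * sqrt mu2)))).
    - intros t Ht. unfold H. pose proof (c0x_pos t Ht). pose proof (root4_pos t Ht).
      derive; try (apply dpl_phase; auto); try assumption.
      + lra.
      + unfold c0x. rewrite tangent_ext_id, root4_pow4, cos_2a_sin by auto. field. lra.
    - intros t Ht. apply Rmult_le_pos; [lra|].
      pose proof (root4_sq_bounds t Ht). pose proof (sqrt_lt_R0 mu1 Hmu1).
      apply (averaging_drift_nonneg mu1 mu2 K); try lra.
      + replace ((root4 t ^ 2) ^ 4) with ((root4 t ^ 4) ^ 2) by ring.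
        rewrite <- root4_pow4 by auto. pose proof (Hbnd t Ht). apply pow_incr. lra.
      + rewrite Rabs_mult. pose proof (HK1 t Ht). pose proof (Rabs_pos (c1 t)).
        pose proof (Rabs_pos (sin (2 * phase t))).
        assert (Rabs (sin (2 * phase t)) <= 1) by (apply Rabs_le, SIN_bound). nra. }
  intros t Ht. specialize (Hm t Ht). unfold H in Hm.
  rewrite phase_0, HPhi0 in Hm. replace (2 * 0) with 0 in Hm by ring. rewrite sin_0 in Hm.
  unfold c0x in Hm. rewrite !tangent_ext_id in Hm by lra.
  assert (eps * sin (2 * phase t) / (4 * c0 t) <= eps / (4 * mu1)).
  { pose proof (Hbnd t Ht). pose proof (SIN_bound (2 * phase t)).
    apply (Rle_trans _ (eps * / (4 * c0 t))).
    - apply Rmult_le_compat_r; [left; apply Rinv_0_lt_compat|]; nra.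
    - apply Rmult_le_compat_l; [lra|]. apply Rinv_le_contravar; lra. }
  pose proof (Hbnd 0 (Rle_refl 0)).
  replace (eps * lam * 0 + eps * 0 / (4 * c0 0) - 1 / (4 * sqrt mu2) * eps * lam * 0) with 0
    in Hm by (unfold Rdiv; ring).
  lra.
Qed.

Hypothesis Hd : 0 <= d.
Hypothesis Heps_small : eps / (2 * sqrt mu1) <= 1 / 5.
Hypothesis HK_small : K / (4 * mu1) <= lam / 5.
Hypothesis Hd_small : d <= lam / 5.
Hypothesis Hexp : mu1 / mu2 <= exp (- (eps / (4 * mu1))).

Lemma drift_bound t : 0 <= t ->
  Rabs (eps * lam * sin (phase t) ^ 2 / (2 * root4 t ^ 2) - d - c1 t / (4 * root4 t ^ 4))
  <= 3 * lam / 5.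
Proof.
  intros Ht. pose proof (root4_pos t Ht) as Hp. pose proof (root4_sq_bounds t Ht) as [Hq1 _].
  pose proof (sqrt_lt_R0 mu1 Hmu1). set (p := root4 t) in *.
  assert (HS : sin (phase t) ^ 2 <= 1).
  { pose proof (sin2_cos2 (phase t)). pose proof (Rle_0_sqr (cos (phase t))).
    unfold Rsqr in *. simpl. lra. }
  assert (R1 : Rabs (eps * lam * sin (phase t) ^ 2 / (2 * p ^ 2)) <= lam / 5).
  { rewrite Rabs_pos_eq.
    2:{ apply Rdiv_le_0_compat; [|lra]. apply Rmult_le_pos; [nra|apply pow2_ge_0]. }
    apply (Rle_trans _ (lam * (eps / (2 * sqrt mu1)))); [|nra].
    apply (Rle_trans _ (eps * lam / (2 * p ^ 2))).
    - apply Rmult_le_compat_r; [left; apply Rinv_0_lt_compat; lra|].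
      rewrite <- (Rmult_1_r (eps * lam)) at 2.
      apply Rmult_le_compat_l; [left; apply Rmult_lt_0_compat|]; lra.
    - replace (lam * (eps / (2 * sqrt mu1))) with (eps * lam / (2 * sqrt mu1)) by (field; lra).
      apply Rmult_le_compat_l; [nra|]. apply Rinv_le_contravar; lra. }
  assert (R2 : Rabs (c1 t / (4 * p ^ 4)) <= lam / 5).
  { replace (p ^ 4) with (c0 t) by (unfold p; rewrite <- root4_pow4; auto).
    pose proof (Hbnd t Ht). unfold Rdiv. rewrite Rabs_mult, (Rabs_pos_eq (/ _))
      by (left; apply Rinv_0_lt_compat; lra).
    pose proof (HK1 t Ht). pose proof (Rabs_pos (c1 t)).
    apply (Rle_trans _ (K * / (4 * mu1))); [|unfold Rdiv in HK_small; lra].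
    apply Rmult_le_compat; try lra; [left; apply Rinv_0_lt_compat; lra|].
    apply Rinv_le_contravar; lra. }
  unfold Rminus. eapply Rle_trans; [apply Rabs_triang|].
  eapply Rle_trans; [apply Rplus_le_compat_r, Rabs_triang|].
  rewrite !Rabs_Ropp, (Rabs_pos_eq d) by lra. lra.
Qed.

Lemma amplitude_sq_lower t : 0 <= t ->
  exp (1 / (4 * sqrt mu2) * eps * lam * t - 2 * d * t) * (mu1 / mu2)
  <= exp (amplitude_exponent t) ^ 2.
Proof.
  intros Ht.
  replace (exp (amplitude_exponent t) ^ 2) with (exp (2 * amplitude_exponent t))
    by (simpl; rewrite Rmult_1_r, <- exp_plus; f_equal; ring).
  apply (Rle_trans _ (exp (1 / (4 * sqrt mu2) * eps * lam * t - 2 * d * t)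
                      * exp (- (eps / (4 * mu1))))).
  - apply Rmult_le_compat_l; [left; apply exp_pos|auto].
  - rewrite <- exp_plus. apply exp_le_compat.
    pose proof (Phi_lower t Ht). unfold amplitude_exponent. lra.
Qed.

Lemma energy_lower t : 0 <= t ->
  y1 t ^ 2 + lam ^ 2 * y t ^ 2 >=
  mu1 * Rmin 1 mu1 / (2 * mu2 ^ 2) * exp (1 / (4 * sqrt mu2) * eps * lam * t - 2 * d * t).
Proof.
  intros Ht.
  pose proof (root4_pos t Ht) as Hp. pose proof norm_const_pos as HN.
  pose proof (root4_sq_bounds t Ht) as [Hq1 Hq2].
  pose proof (root4_sq_bounds 0 (Rle_refl 0)) as [Hq01 Hq02].
  pose proof (Hbnd t Ht) as Hb. pose proof (root4_pow4 t Ht) as HP4.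
  pose proof (sqrt_lt_R0 mu1 Hmu1).
  set (E := exp (amplitude_exponent t)). set (p := root4 t) in *.
  set (r := eps * lam * sin (phase t) ^ 2 / (2 * p ^ 2) - d - c1 t / (4 * p ^ 4)).
  set (m := Rmin 1 mu1).
  assert (Hm : 0 < m <= 1) by (split; [apply Rmin_pos; lra|apply Rmin_l]).
  assert (Hmp : m <= p ^ 4) by (pose proof (Rmin_r 1 mu1) as Hr; fold m in Hr; lra).
  assert (HQ : lam ^ 2 / 2 * m <=
               (lam * p ^ 2 * cos (phase t) + sin (phase t) * r) ^ 2
               + lam ^ 2 * sin (phase t) ^ 2).
  { apply wkb_energy_lower; auto.
    - pose proof (sin2_cos2 (phase t)). unfold Rsqr in *. simpl. lra.
    - pose proof (drift_bound t Ht) as Hr. fold p r in Hr.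
      rewrite <- pow2_abs.
      replace (9 * lam ^ 2 / 25) with ((3 * lam / 5) ^ 2) by field.
      apply pow_incr. split; [apply Rabs_pos|exact Hr]. }
  assert (HNp : (norm_const * p) ^ 2 <= lam ^ 2 * mu2).
  { unfold norm_const.
    replace ((lam * root4 0 * p) ^ 2) with (lam ^ 2 * (root4 0 ^ 2 * p ^ 2)) by ring.
    apply Rmult_le_compat_l; [apply pow2_ge_0|].
    replace mu2 with (sqrt mu2 * sqrt mu2) by (apply sqrt_sqrt; lra).
    apply Rmult_le_compat; lra. }
  pose proof (amplitude_sq_lower t Ht) as HE. fold E in HE.
  set (G := exp (1 / (4 * sqrt mu2) * eps * lam * t - 2 * d * t)) in *.
  assert (HG : 0 < G) by apply exp_pos.
  assert (HNp0 : 0 < (norm_const * p) ^ 2) by (apply pow_lt; nra).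
  replace (y1 t ^ 2 + lam ^ 2 * y t ^ 2) with
    (E ^ 2 * ((lam * p ^ 2 * cos (phase t) + sin (phase t) * r) ^ 2
              + lam ^ 2 * sin (phase t) ^ 2) / (norm_const * p) ^ 2).
  2:{ unfold y1, y, r, c1x. rewrite tangent_ext_id by auto. fold E p. field. lra. }
  apply Rle_ge.
  apply (Rle_trans _ (G * (mu1 / mu2) * (lam ^ 2 / 2 * m) / (lam ^ 2 * mu2))).
  - right. field. lra.
  - assert (0 < G * (mu1 / mu2)) by (apply Rmult_lt_0_compat; [|apply Rdiv_lt_0_compat]; lra).
    assert (0 < lam ^ 2 / 2 * m) by (pose proof (pow_lt lam 2 Hlam); nra).
    unfold Rdiv at 1 2. apply Rmult_le_compat.
    + apply Rmult_le_pos; lra.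
    + left; apply Rinv_0_lt_compat. pose proof (pow_lt lam 2 Hlam). nra.
    + apply Rmult_le_compat; lra.
    + apply Rinv_le_contravar; lra.
Qed.

End WKB.
End Phase.
End ExplicitSolution.

(** * Uniqueness for the damped oscillator *)

(* For [z'' + 2 d z' + lam^2 G z = 0] the energy [z'^2 + lam^2 z^2] grows at most
   like [exp (lam (1 + sup |G|) t)], so it stays 0 if it starts at 0. *)
Lemma damped_oscillator_zero (z z1 G : R -> R) (d lam B : R) : 0 <= d -> 0 < lam ->
  (forall t, 0 <= t -> Rabs (G t) <= B) ->
  (forall t, 0 <= t -> deriv_nonneg z t (z1 t)) ->
  (forall t, 0 <= t -> deriv_nonneg z1 t (- (2 * d * z1 t + lam ^ 2 * G t * z t))) ->
  z 0 = 0 -> z1 0 = 0 -> forall t, 0 <= t -> z t = 0 /\ z1 t = 0.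
Proof.
  intros Hd Hl HG Hz Hz1 H0 H10.
  set (z2 := fun t => - (2 * d * z1 t + lam ^ 2 * G t * z t)).
  set (Z := tangent_ext z (z1 0)). set (Z1 := tangent_ext z1 (z2 0)).
  assert (dZ : forall t, 0 <= t -> dpl Z t (z1 t)) by exact (dpl_tangent_ext z z1 Hz).
  assert (dZ1 : forall t, 0 <= t -> dpl Z1 t (z2 t)) by exact (dpl_tangent_ext z1 z2 Hz1).
  set (k := lam * (1 + B)).
  set (F := fun t => - ((Z1 t ^ 2 + lam ^ 2 * Z t ^ 2) * exp (- (k * t)))).
  assert (HF : forall t, 0 <= t -> F 0 <= F t).
  { apply (dpl_nonneg_ge_at_0 F (fun t =>
      - ((2 * z1 t * z2 t + lam ^ 2 * (2 * z t * z1 t)) - (z1 t ^ 2 + lam ^ 2 * z t ^ 2) * k)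
      * exp (- (k * t)))).
    - intros t Ht. unfold F. derive.
      unfold Z, Z1. rewrite !tangent_ext_id by auto.
      replace (INR 2) with 2 by (simpl; lra). simpl pred. ring.
    - intros t Ht. apply Rmult_le_pos; [|left; apply exp_pos].
      assert (B0 : 0 <= B) by (pose proof (HG t Ht); pose proof (Rabs_pos (G t)); lra).
      assert (Hg : Rabs (1 - G t) <= 1 + B).
      { eapply Rle_trans; [apply Rabs_triang|]. rewrite Rabs_Ropp, Rabs_R1.
        pose proof (HG t Ht); lra. }
      pose proof (young_abs (1 - G t) (lam * z t) (z1 t) (1 + B) Hg).
      assert (0 <= d * z1 t ^ 2) by (apply Rmult_le_pos; [lra|apply pow2_ge_0]).
      unfold z2, k. nra. }
  intros t Ht. specialize (HF t Ht). unfold F, Z, Z1 in HF.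
  rewrite !tangent_ext_id, H0, H10 in HF by lra.
  replace (- (k * 0)) with 0 in HF by ring. rewrite exp_0 in HF.
  pose proof (exp_pos (- (k * t))).
  assert (z1 t ^ 2 + lam ^ 2 * z t ^ 2 <= 0) by nra.
  pose proof (pow2_ge_0 (z1 t)). pose proof (pow2_ge_0 (lam * z t)).
  assert (Hz1t : z1 t = 0) by (apply Rsqr_0_uniq; unfold Rsqr; nra).
  assert (Hzt : lam * z t = 0) by (apply Rsqr_0_uniq; unfold Rsqr; nra).
  apply Rmult_integral in Hzt. split; lra.
Qed.

(** * Size of the correction terms *)

Definition gamma_c_dev mu1 K eps lam :=
  eps + eps ^ 2 / (4 * mu1) + 5 * K ^ 2 / (16 * lam ^ 2 * mu1 ^ 2)
  + eps * K / (2 * lam * (mu1 * sqrt mu1)) + K / (4 * lam ^ 2 * mu1).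

Lemma gamma_c_dev_bound mu1 mu2 K (c0 c1 c2 A : R -> R) eps lam k t :
  0 < mu1 -> mu1 <= c0 t <= mu2 -> Rabs (c1 t) <= K -> Rabs (c2 t) <= K ->
  0 <= eps -> 0 < lam ->
  Rabs (gamma_c c0 c1 c2 A eps lam k t - c0 t - k) <= gamma_c_dev mu1 K eps lam.
Proof.
  intros Hm Hb H1 H2 He Hl. unfold gamma_c, gamma_c_dev. cbv zeta.
  set (S := sin (lam * A t)).
  assert (HS : Rabs S <= 1) by apply Rabs_sin_le.
  assert (Hsq : sqrt mu1 <= sqrt (c0 t)) by (apply sqrt_le_1_alt; lra).
  assert (Hs1 : 0 < sqrt mu1) by (apply sqrt_lt_R0; lra).
  assert (Hl2 : 0 < lam ^ 2) by (apply pow_lt; lra).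
  assert (T1 : Rabs (eps * sin (2 * (lam * A t))) <= eps * 1).
  { apply Rabs_mult_le; [rewrite Rabs_pos_eq; lra|apply Rabs_sin_le]. }
  assert (T2 : Rabs (eps ^ 2 / 4 * (S ^ 4 / c0 t)) <= eps ^ 2 / 4 * (1 ^ 4 / mu1)).
  { apply Rabs_mult_le.
    - rewrite Rabs_pos_eq; [lra|]. apply Rdiv_le_0_compat; [apply pow2_ge_0|lra].
    - apply Rabs_div_le; [apply Rabs_pow_le|..]; lra. }
  assert (T3 : Rabs (5 / (16 * lam ^ 2) * (c1 t / c0 t) ^ 2)
               <= 5 / (16 * lam ^ 2) * (K / mu1) ^ 2).
  { apply Rabs_mult_le.
    - rewrite Rabs_pos_eq; [lra|]. apply Rdiv_le_0_compat; lra.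
    - apply Rabs_pow_le, Rabs_div_le; lra. }
  assert (T4 : Rabs (eps / (2 * lam) * (c1 t / (c0 t * sqrt (c0 t))) * S ^ 2)
               <= eps / (2 * lam) * (K / (mu1 * sqrt mu1)) * 1 ^ 2).
  { apply Rabs_mult_le; [|apply Rabs_pow_le; auto]. apply Rabs_mult_le.
    - rewrite Rabs_pos_eq; [lra|]. apply Rdiv_le_0_compat; lra.
    - apply Rabs_div_le; [auto|apply Rmult_lt_0_compat; lra|apply Rmult_le_compat; lra]. }
  assert (T5 : Rabs (1 / (4 * lam ^ 2) * (c2 t / c0 t)) <= 1 / (4 * lam ^ 2) * (K / mu1)).
  { apply Rabs_mult_le.
    - rewrite Rabs_pos_eq; [lra|]. apply Rdiv_le_0_compat; lra.
    - apply Rabs_div_le; lra. }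
  set (X1 := eps * sin (2 * (lam * A t))) in *.
  set (X2 := eps ^ 2 / 4 * (S ^ 4 / c0 t)) in *.
  set (X3 := 5 / (16 * lam ^ 2) * (c1 t / c0 t) ^ 2) in *.
  set (X4 := eps / (2 * lam) * (c1 t / (c0 t * sqrt (c0 t))) * S ^ 2) in *.
  set (X5 := 1 / (4 * lam ^ 2) * (c2 t / c0 t)) in *.
  replace (c0 t - X1 - X2 - X3 + X4 + X5 + k - c0 t - k) with (- X1 - X2 - X3 + X4 + X5)
    by ring.
  assert (Rabs (- X1 - X2 - X3 + X4 + X5)
          <= Rabs X1 + Rabs X2 + Rabs X3 + Rabs X4 + Rabs X5).
  { unfold Rminus.
    pose proof (Rabs_triang (-X1 + -X2 + -X3 + X4) X5).
    pose proof (Rabs_triang (-X1 + -X2 + -X3) X4).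
    pose proof (Rabs_triang (-X1 + -X2) (-X3)).
    pose proof (Rabs_triang (-X1) (-X2)).
    rewrite !Rabs_Ropp in *. lra. }
  replace (eps ^ 2 / 4 * (1 ^ 4 / mu1)) with (eps ^ 2 / (4 * mu1)) in T2 by (field; lra).
  replace (5 / (16 * lam ^ 2) * (K / mu1) ^ 2) with (5 * K ^ 2 / (16 * lam ^ 2 * mu1 ^ 2))
    in T3 by (field; lra).
  replace (eps / (2 * lam) * (K / (mu1 * sqrt mu1)) * 1 ^ 2)
    with (eps * K / (2 * lam * (mu1 * sqrt mu1))) in T4 by (field; lra).
  replace (1 / (4 * lam ^ 2) * (K / mu1)) with (K / (4 * lam ^ 2 * mu1)) in T5 by (field; lra).
  lra.
Qed.

Lemma gamma_c_dev_small mu1 K : 0 < mu1 -> 0 <= K -> forall eta, 0 < eta ->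
  exists e1 L, 0 < e1 /\ forall e l, 0 <= e < e1 -> L < l -> gamma_c_dev mu1 K e l < eta.
Proof.
  intros Hm HK eta Heta.
  pose proof (sqrt_lt_R0 mu1 Hm) as Hs.
  set (Ce := 1 + 1 / (4 * mu1) + K / (2 * (mu1 * sqrt mu1))).
  set (Cl := 5 * K ^ 2 / (16 * mu1 ^ 2) + K / (4 * mu1)).
  assert (HCe : 1 <= Ce).
  { assert (0 <= 1 / (4 * mu1)) by (apply Rdiv_le_0_compat; lra).
    assert (0 <= K / (2 * (mu1 * sqrt mu1))) by (apply Rdiv_le_0_compat; [lra|]; nra).
    unfold Ce. lra. }
  assert (HCl : 0 <= Cl).
  { assert (0 <= 5 * K ^ 2 / (16 * mu1 ^ 2)) by (apply Rdiv_le_0_compat; nra).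
    assert (0 <= K / (4 * mu1)) by (apply Rdiv_le_0_compat; lra).
    unfold Cl. lra. }
  exists (Rmin 1 (eta / (2 * Ce))), (Rmax 1 (2 * Cl / eta + 1)). split.
  { apply Rmin_pos; [lra|]. apply Rdiv_lt_0_compat; lra. }
  intros e l He Hl.
  pose proof (Rmin_l 1 (eta / (2 * Ce))). pose proof (Rmin_r 1 (eta / (2 * Ce))).
  pose proof (Rmax_l 1 (2 * Cl / eta + 1)). pose proof (Rmax_r 1 (2 * Cl / eta + 1)).
  assert (Hl1 : 1 < l) by lra.
  assert (Hinv : / l <= 1) by (rewrite <- Rinv_1; apply Rinv_le_contravar; lra).
  assert (Hb : gamma_c_dev mu1 K e l <= e * Ce + Cl / l).
  { unfold gamma_c_dev, Ce, Cl.
    assert (e ^ 2 / (4 * mu1) <= e * (1 / (4 * mu1))).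
    { unfold Rdiv. rewrite <- Rmult_assoc.
      apply Rmult_le_compat_r; [left; apply Rinv_0_lt_compat; lra|]. nra. }
    assert (5 * K ^ 2 / (16 * l ^ 2 * mu1 ^ 2) <= 5 * K ^ 2 / (16 * mu1 ^ 2) / l).
    { replace (5 * K ^ 2 / (16 * l ^ 2 * mu1 ^ 2))
        with (5 * K ^ 2 / (16 * mu1 ^ 2) / l * / l) by (field; lra).
      assert (0 <= 5 * K ^ 2 / (16 * mu1 ^ 2) / l)
        by (apply Rdiv_le_0_compat; [apply Rdiv_le_0_compat|]; nra).
      nra. }
    assert (e * K / (2 * l * (mu1 * sqrt mu1)) <= e * (K / (2 * (mu1 * sqrt mu1)))).
    { replace (e * K / (2 * l * (mu1 * sqrt mu1)))
        with (e * (K / (2 * (mu1 * sqrt mu1))) * / l) by (field; lra).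
      assert (0 <= e * (K / (2 * (mu1 * sqrt mu1))))
        by (apply Rmult_le_pos; [lra|apply Rdiv_le_0_compat; nra]).
      nra. }
    assert (K / (4 * l ^ 2 * mu1) <= K / (4 * mu1) / l).
    { replace (K / (4 * l ^ 2 * mu1)) with (K / (4 * mu1) / l * / l) by (field; lra).
      assert (0 <= K / (4 * mu1) / l) by (apply Rdiv_le_0_compat; [apply Rdiv_le_0_compat|]; lra).
      nra. }
    replace ((5 * K ^ 2 / (16 * mu1 ^ 2) + K / (4 * mu1)) / l) with
      (5 * K ^ 2 / (16 * mu1 ^ 2) / l + K / (4 * mu1) / l) by (field; lra).
    lra. }
  assert (e * Ce < eta / 2).
  { apply (Rlt_le_trans _ (eta / (2 * Ce) * Ce)); [apply Rmult_lt_compat_r; lra|].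
    right; field; lra. }
  assert (Cl / l < eta / 2).
  { apply (Rmult_lt_reg_r l); [lra|]. replace (Cl / l * l) with Cl by (field; lra).
    assert (2 * Cl / eta * eta = 2 * Cl) by (field; lra). nra. }
  lra.
Qed.

Lemma gamma_c_bounded mu1 mu2 K (c0 c1 c2 A : R -> R) eps lam k :
  0 < mu1 -> 0 <= eps -> 0 < lam -> 0 <= k ->
  (forall t, 0 <= t -> mu1 <= c0 t <= mu2) ->
  (forall t, 0 <= t -> Rabs (c1 t) <= K) -> (forall t, 0 <= t -> Rabs (c2 t) <= K) ->
  forall t, 0 <= t -> Rabs (gamma_c c0 c1 c2 A eps lam k t) <= mu2 + k + gamma_c_dev mu1 K eps lam.
Proof.
  intros Hm He Hl Hk Hb H1 H2 t Ht.
  pose proof (gamma_c_dev_bound mu1 mu2 K c0 c1 c2 A eps lam k t Hm (Hb t Ht) (H1 t Ht) (H2 t Ht)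
    He Hl).
  set (g := gamma_c c0 c1 c2 A eps lam k t) in *.
  replace g with ((g - c0 t - k) + c0 t + k) by ring.
  pose proof (Rabs_triang (g - c0 t - k + c0 t) k) as T1.
  pose proof (Rabs_triang (g - c0 t - k) (c0 t)) as T2.
  pose proof (Hb t Ht).
  rewrite (Rabs_pos_eq (c0 t)) in T2 by lra. rewrite (Rabs_pos_eq k) in T1 by lra. lra.
Qed.

(** * Parts (i) and (iii) *)

Definition eventually (P : nat -> Prop) : Prop :=
  exists N, forall n, (N <= n)%nat -> P n.

Lemma eventually_and (P Q : nat -> Prop) :
  eventually P -> eventually Q -> eventually (fun n => P n /\ Q n).
Proof.
  intros [N1 H1] [N2 H2]. exists (max N1 N2). intros n Hn.
  split; [apply H1|apply H2]; lia.
Qed.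

Lemma eventually_gt (lam : nat -> R) M : cv_infty lam -> eventually (fun n => M < lam n).
Proof. intros H. apply H. Qed.

Lemma eventually_lt (eps : nat -> R) e0 : Un_cv eps 0 -> 0 < e0 ->
  (forall n, 0 < eps n) -> eventually (fun n => eps n < e0).
Proof.
  intros H He Hpos. destruct (H e0 He) as [N HN]. exists N. intros n Hn.
  specialize (HN n Hn). unfold Rdist in HN. rewrite Rminus_0_r, Rabs_pos_eq in HN; auto.
  left; auto.
Qed.

Lemma gamma_unif_cvg mu1 mu2 delta sigma K (c0 c1 c2 A : R -> R) (lam eps : nat -> R) :
  0 < mu1 -> 0 < sigma < 1 / 2 ->
  (forall t, 0 <= t -> mu1 <= c0 t <= mu2) ->
  (forall t, 0 <= t -> Rabs (c1 t) <= K) -> (forall t, 0 <= t -> Rabs (c2 t) <= K) ->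
  (forall n, 0 < lam n) -> (forall n, 0 < eps n) -> cv_infty lam -> Un_cv eps 0 ->
  forall eta, 0 < eta -> eventually (fun n => forall t, 0 <= t ->
    Rabs (gamma c0 c1 c2 A delta sigma (eps n) (lam n) t - c0 t) < eta).
Proof.
  intros Hmu1 Hsigma Hbnd HK1 HK2 Hlam Heps Hlaminf Heps0 eta Heta.
  assert (HK : 0 <= K) by (pose proof (HK1 0 (Rle_refl 0)); pose proof (Rabs_pos (c1 0)); lra).
  destruct (gamma_c_dev_small mu1 K Hmu1 HK (eta / 2) ltac:(lra)) as [e1 [L1 [He1 HD]]].
  destruct (Rpower_inv_small delta (2 - 4 * sigma) ltac:(lra) (eta / 2) ltac:(lra))
    as [L2 [HL2 Hk]].
  destruct (eventually_and _ _ (eventually_and _ _ (eventually_gt lam L1 Hlaminf)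
    (eventually_gt lam L2 Hlaminf)) (eventually_lt eps e1 Heps0 He1 Heps)) as [N HN].
  exists N. intros n Hn t Ht. destruct (HN n Hn) as [[Hl1 Hl2] He].
  pose proof (Heps n). rewrite gamma_gamma_c.
  set (k := delta ^ 2 / Rpower (lam n) (2 - 4 * sigma)).
  pose proof (gamma_c_dev_bound mu1 mu2 K c0 c1 c2 A (eps n) (lam n) k t Hmu1 (Hbnd t Ht)
    (HK1 t Ht) (HK2 t Ht) ltac:(lra) (Hlam n)).
  assert (0 <= k) by (apply Rdiv_le_0_compat; [apply pow2_ge_0|apply Rpower_pos]).
  assert (k < eta / 2) by (apply Hk; lra).
  assert (gamma_c_dev mu1 K (eps n) (lam n) < eta / 2) by (apply HD; lra).
  set (g := gamma_c c0 c1 c2 A (eps n) (lam n) k t) in *.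
  replace (g - c0 t) with ((g - c0 t - k) + k) by ring.
  pose proof (Rabs_triang (g - c0 t - k) k) as HT. rewrite (Rabs_pos_eq k) in HT by lra.
  lra.
Qed.

Section EnergyLower.
Variables (mu1 mu2 K : R) (c0 c1 c2 A : R -> R).
Hypothesis Hmu1 : 0 < mu1.
Hypothesis Hc1 : forall t, 0 <= t -> deriv_nonneg c0 t (c1 t).
Hypothesis Hc2 : forall t, 0 <= t -> deriv_nonneg c1 t (c2 t).
Hypothesis HA : forall t, 0 <= t -> deriv_nonneg A t (sqrt (c0 t)).
Hypothesis HA0 : A 0 = 0.
Hypothesis Hbnd : forall t, 0 <= t -> mu1 <= c0 t <= mu2.
Hypothesis HK1 : forall t, 0 <= t -> Rabs (c1 t) <= K.
Hypothesis HK2 : forall t, 0 <= t -> Rabs (c2 t) <= K.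

(* By uniqueness the solution is the explicit [y] of [ExplicitSolution]. *)
Lemma solution_energy_lower (lam eps d : R) (z z1 : R -> R) :
  0 < lam -> 0 < eps -> 0 <= d ->
  K * sqrt mu2 <= lam * mu1 ^ 2 -> eps / (2 * sqrt mu1) <= 1 / 5 ->
  K / (4 * mu1) <= lam / 5 -> d <= lam / 5 -> mu1 / mu2 <= exp (- (eps / (4 * mu1))) ->
  (forall t, 0 <= t -> deriv_nonneg z t (z1 t)) ->
  (forall t, 0 <= t -> deriv_nonneg z1 t
     (- (2 * d * z1 t + lam ^ 2 * gamma_c c0 c1 c2 A eps lam (d ^ 2 / lam ^ 2) t * z t))) ->
  z 0 = 0 -> z1 0 = 1 ->
  forall t, 0 <= t -> z1 t ^ 2 + lam ^ 2 * z t ^ 2 >=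
    mu1 * Rmin 1 mu1 / (2 * mu2 ^ 2) * exp (1 / (4 * sqrt mu2) * eps * lam * t - 2 * d * t).
Proof.
  intros Hl He Hd HlamK Heps_small HK_small Hd_small Hexp Hz Hz1 Hz0 Hz10.
  destruct (antiderivative_continuous _
    (averaging_integrand_continuous mu1 mu2 c0 c1 A Hmu1 Hc1 HA Hbnd lam)) as [Phi [HPhi0 HPhi]].
  set (y := y c0 c1 A lam eps d Phi). set (y1 := y1 c0 c1 c2 A lam eps d Phi).
  assert (Hk : 0 <= d ^ 2 / lam ^ 2)
    by (apply Rdiv_le_0_compat; [apply pow2_ge_0|apply pow_lt; lra]).
  assert (Hzy : forall t, 0 <= t -> z t - y t = 0 /\ z1 t - y1 t = 0).
  { apply (damped_oscillator_zero (fun t => z t - y t) (fun t => z1 t - y1 t)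
      (gamma_c c0 c1 c2 A eps lam (d ^ 2 / lam ^ 2)) d lam _ Hd Hl
      (gamma_c_bounded mu1 mu2 K c0 c1 c2 A eps lam _ Hmu1 ltac:(lra) Hl Hk Hbnd HK1 HK2)).
    - intros t Ht. apply deriv_nonneg_minus; auto.
      apply deriv_nonneg_dpl.
      exact (dpl_y mu1 mu2 c0 c1 c2 A Hmu1 Hc1 HA Hbnd lam eps d Hl Phi HPhi t Ht).
    - intros t Ht.
      replace (- (2 * d * (z1 t - y1 t) + lam ^ 2 * gamma_c c0 c1 c2 A eps lam (d ^ 2 / lam ^ 2) t
                  * (z t - y t)))
        with ((- (2 * d * z1 t + lam ^ 2 * gamma_c c0 c1 c2 A eps lam (d ^ 2 / lam ^ 2) t * z t))
              - (- (2 * d * y1 t + lam ^ 2 * gamma_c c0 c1 c2 A eps lam (d ^ 2 / lam ^ 2) t * y t)))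
        by ring.
      apply deriv_nonneg_minus; auto.
      apply deriv_nonneg_dpl.
      exact (dpl_y1 mu1 mu2 c0 c1 c2 A Hmu1 Hc1 Hc2 HA Hbnd lam eps d Hl Phi HPhi t Ht).
    - unfold y. rewrite Hz0, (y_0 c0 c1 A HA0). ring.
    - unfold y1. rewrite Hz10, (y1_0 mu1 mu2 c0 c1 c2 A Hmu1 HA0 Hbnd lam eps d Hl Phi HPhi0).
      ring. }
  intros t Ht. destruct (Hzy t Ht) as [Ht1 Ht2].
  replace (z1 t) with (y1 t) by lra. replace (z t) with (y t) by lra.
  exact (energy_lower mu1 mu2 c0 c1 c2 A Hmu1 Hc1 HA HA0 Hbnd lam eps d Hl Phi HPhi0 HPhi He K HK1
    HlamK Hd Heps_small HK_small Hd_small Hexp t Ht).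
Qed.

End EnergyLower.

Lemma gamma_energy_lower mu1 mu2 delta sigma K (c0 c1 c2 A : R -> R) (lam eps : nat -> R)
  (w w1 : nat -> R -> R) :
  0 < mu1 -> mu1 < mu2 -> 0 <= delta -> 0 < sigma < 1 / 2 ->
  (forall t, 0 <= t -> deriv_nonneg c0 t (c1 t)) ->
  (forall t, 0 <= t -> deriv_nonneg c1 t (c2 t)) ->
  (forall t, 0 <= t -> mu1 <= c0 t <= mu2) ->
  (forall t, 0 <= t -> Rabs (c1 t) <= K) -> (forall t, 0 <= t -> Rabs (c2 t) <= K) ->
  A 0 = 0 -> (forall t, 0 <= t -> deriv_nonneg A t (sqrt (c0 t))) ->
  (forall n, 0 < lam n) -> (forall n, 0 < eps n) -> cv_infty lam -> Un_cv eps 0 ->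
  (forall n t, 0 <= t -> deriv_nonneg (w n) t (w1 n t)) ->
  (forall n t, 0 <= t -> deriv_nonneg (w1 n) t
      (- (2 * delta * Rpower (lam n) (2 * sigma) * w1 n t
          + lam n ^ 2 * gamma c0 c1 c2 A delta sigma (eps n) (lam n) t * w n t))) ->
  (forall n, w n 0 = 0) -> (forall n, w1 n 0 = 1) ->
  eventually (fun n => forall t, 0 <= t ->
    w1 n t ^ 2 + lam n ^ 2 * w n t ^ 2 >=
    mu1 * Rmin 1 mu1 / (2 * mu2 ^ 2) * exp (1 / (4 * sqrt mu2) * eps n * lam n * t
                                           - 2 * delta * Rpower (lam n) (2 * sigma) * t)).
Proof.
  intros Hmu1 Hmu12 Hdelta Hsigma Hc1 Hc2 Hbnd HK1 HK2 HA0 HA Hlam Heps Hlaminf Heps0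
    Hw Hw1 Hw0 Hw10.
  pose proof (sqrt_lt_R0 mu1 Hmu1).
  assert (Hmu1sq : 0 < mu1 ^ 2) by (apply pow_lt; lra).
  assert (Hln : 0 < - 4 * mu1 * ln (mu1 / mu2)).
  { assert (ln (mu1 / mu2) < 0); [|nra].
    rewrite <- ln_1. apply ln_increasing; [apply Rdiv_lt_0_compat; lra|].
    apply (Rmult_lt_reg_r mu2); [lra|]. field_simplify; lra. }
  destruct (Rpower_sublinear delta (2 * sigma) Hdelta ltac:(lra)) as [M0 [_ HM0]].
  destruct (eventually_and _ _
    (eventually_and _ _ (eventually_gt lam M0 Hlaminf)
       (eventually_and _ _ (eventually_gt lam (K * sqrt mu2 / mu1 ^ 2) Hlaminf)
                           (eventually_gt lam (5 * K / (4 * mu1)) Hlaminf)))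
    (eventually_and _ _ (eventually_lt eps (2 * sqrt mu1 / 5) Heps0 ltac:(lra) Heps)
                        (eventually_lt eps _ Heps0 Hln Heps)))
    as [N HN].
  exists N. intros n Hn.
  destruct (HN n Hn) as [[HlM0 [HlK1 HlK2]] [He1 He2]].
  pose proof (Hlam n). pose proof (Heps n).
  set (d := delta * Rpower (lam n) (2 * sigma)).
  intros t Ht.
  replace (2 * delta * Rpower (lam n) (2 * sigma) * t) with (2 * d * t) by (unfold d; ring).
  revert t Ht.
  apply (solution_energy_lower mu1 mu2 K c0 c1 c2 A Hmu1 Hc1 Hc2 HA HA0 Hbnd HK1 HK2
    (lam n) (eps n) d (w n) (w1 n)); auto.
  - unfold d. apply Rmult_le_pos; [lra|left; apply Rpower_pos].
  - apply (Rmult_le_reg_r (/ mu1 ^ 2)); [apply Rinv_0_lt_compat; lra|].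
    replace (lam n * mu1 ^ 2 * / mu1 ^ 2) with (lam n) by (field; lra). lra.
  - apply (Rmult_le_reg_r (2 * sqrt mu1)); [lra|].
    replace (eps n / (2 * sqrt mu1) * (2 * sqrt mu1)) with (eps n) by (field; lra). lra.
  - replace (K / (4 * mu1)) with (5 * K / (4 * mu1) / 5) by (field; lra). lra.
  - apply HM0. lra.
  - rewrite <- (exp_ln (mu1 / mu2)) by (apply Rdiv_lt_0_compat; lra).
    apply exp_le_compat.
    apply (Rmult_le_reg_r (4 * mu1)); [lra|].
    replace (- (eps n / (4 * mu1)) * (4 * mu1)) with (- eps n) by (field; lra). lra.
  - intros t Ht. unfold d. rewrite Rpower_damping_sq, <- gamma_gamma_c by auto.
    replace (2 * (delta * Rpower (lam n) (2 * sigma)))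
      with (2 * delta * Rpower (lam n) (2 * sigma)) by ring.
    auto.
Qed.

(** * Hoelder estimates *)

(* [f] is bounded by [M] on [0, +oo) and Lipschitz with constant [a + b l], where
   [l] stands for the frequency [lam]. *)
Definition bdd_lip (l : R) (f : R -> R) (M a b : R) :=
  0 <= a /\ 0 <= b /\ (forall t, 0 <= t -> Rabs (f t) <= M) /\
  (forall t s, 0 <= t -> 0 <= s -> Rabs (f t - f s) <= (a + b * l) * Rabs (t - s)).

Lemma bdd_lip_bound_nonneg l f M a b : bdd_lip l f M a b -> 0 <= M.
Proof. intros [_ [_ [H _]]]. pose proof (H 0 (Rle_refl 0)). pose proof (Rabs_pos (f 0)). lra. Qed.

Lemma bdd_lip_mult l f g M1 a1 b1 M2 a2 b2 :
  0 <= l -> bdd_lip l f M1 a1 b1 -> bdd_lip l g M2 a2 b2 ->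
  bdd_lip l (fun t => f t * g t) (M1 * M2) (M1 * a2 + M2 * a1) (M1 * b2 + M2 * b1).
Proof.
  intros Hl H1 H2.
  pose proof (bdd_lip_bound_nonneg _ _ _ _ _ H1) as HM1.
  pose proof (bdd_lip_bound_nonneg _ _ _ _ _ H2) as HM2.
  destruct H1 as [Ha1 [Hb1 [HB1 HL1]]]. destruct H2 as [Ha2 [Hb2 [HB2 HL2]]].
  split; [nra|]. split; [nra|]. split.
  - intros t Ht. rewrite Rabs_mult. pose proof (HB1 t Ht); pose proof (HB2 t Ht).
    apply Rmult_le_compat; auto; apply Rabs_pos.
  - intros t s Ht Hs.
    replace (f t * g t - f s * g s) with (f t * (g t - g s) + g s * (f t - f s)) by ring.
    eapply Rle_trans; [apply Rabs_triang|]. rewrite !Rabs_mult.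
    pose proof (HB1 t Ht); pose proof (HB2 s Hs).
    pose proof (HL1 t s Ht Hs); pose proof (HL2 t s Ht Hs).
    pose proof (Rabs_pos (f t)); pose proof (Rabs_pos (g s)); pose proof (Rabs_pos (t - s)).
    pose proof (Rabs_pos (g t - g s)); pose proof (Rabs_pos (f t - f s)).
    assert (Rabs (f t) * Rabs (g t - g s) <= M1 * ((a2 + b2 * l) * Rabs (t - s)))
      by (apply Rmult_le_compat; auto).
    assert (Rabs (g s) * Rabs (f t - f s) <= M2 * ((a1 + b1 * l) * Rabs (t - s)))
      by (apply Rmult_le_compat; auto).
    nra.
Qed.

Lemma bdd_lip_plus l f g M1 a1 b1 M2 a2 b2 : bdd_lip l f M1 a1 b1 -> bdd_lip l g M2 a2 b2 ->
  bdd_lip l (fun t => f t + g t) (M1 + M2) (a1 + a2) (b1 + b2).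
Proof.
  intros [Ha1 [Hb1 [HB1 HL1]]] [Ha2 [Hb2 [HB2 HL2]]].
  split; [lra|]. split; [lra|]. split.
  - intros t Ht. eapply Rle_trans; [apply Rabs_triang|].
    pose proof (HB1 t Ht); pose proof (HB2 t Ht). lra.
  - intros t s Ht Hs. replace (f t + g t - (f s + g s)) with ((f t - f s) + (g t - g s)) by ring.
    eapply Rle_trans; [apply Rabs_triang|].
    pose proof (HL1 t s Ht Hs); pose proof (HL2 t s Ht Hs). nra.
Qed.

Lemma bdd_lip_scal l c f M a b : bdd_lip l f M a b ->
  bdd_lip l (fun t => c * f t) (Rabs c * M) (Rabs c * a) (Rabs c * b).
Proof.
  intros [Ha [Hb [HB HL]]]. pose proof (Rabs_pos c).
  split; [nra|]. split; [nra|]. split.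
  - intros t Ht. rewrite Rabs_mult. apply Rmult_le_compat_l; auto.
  - intros t s Ht Hs. replace (c * f t - c * f s) with (c * (f t - f s)) by ring.
    rewrite Rabs_mult. replace ((Rabs c * a + Rabs c * b * l) * Rabs (t - s)) with
      (Rabs c * ((a + b * l) * Rabs (t - s))) by ring.
    apply Rmult_le_compat_l; auto.
Qed.

Lemma bdd_lip_inv l f m M a b : 0 < m -> (forall t, 0 <= t -> m <= f t) -> bdd_lip l f M a b ->
  bdd_lip l (fun t => 1 / f t) (1 / m) (a / m ^ 2) (b / m ^ 2).
Proof.
  intros Hm Hf [Ha [Hb [HB HL]]].
  assert (Hm2 : 0 < m ^ 2) by (apply pow_lt; lra).
  split; [apply Rdiv_le_0_compat; lra|]. split; [apply Rdiv_le_0_compat; lra|]. split.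
  - intros t Ht. pose proof (Hf t Ht). rewrite Rabs_pos_eq by (apply Rdiv_le_0_compat; lra).
    unfold Rdiv. rewrite !Rmult_1_l. apply Rinv_le_contravar; lra.
  - intros t s Ht Hs. pose proof (Hf t Ht); pose proof (Hf s Hs).
    replace (1 / f t - 1 / f s) with ((f s - f t) / (f t * f s)) by (field; lra).
    unfold Rdiv at 1. rewrite Rabs_mult, Rabs_inv, (Rabs_pos_eq (f t * f s)) by nra.
    rewrite Rabs_minus_sym. pose proof (HL t s Ht Hs).
    replace ((a / m ^ 2 + b / m ^ 2 * l) * Rabs (t - s))
      with ((a + b * l) * Rabs (t - s) * / m ^ 2) by (field; lra).
    apply Rmult_le_compat; auto. apply Rabs_pos. left; apply Rinv_0_lt_compat; nra.
    apply Rinv_le_contravar; auto. simpl. rewrite Rmult_1_r. apply Rmult_le_compat; lra.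
Qed.

Lemma bdd_lip_sqrt l f m M a b : 0 < m -> (forall t, 0 <= t -> m <= f t) -> bdd_lip l f M a b ->
  bdd_lip l (fun t => sqrt (f t)) (sqrt M) (a / (2 * sqrt m)) (b / (2 * sqrt m)).
Proof.
  intros Hm Hf [Ha [Hb [HB HL]]].
  pose proof (sqrt_lt_R0 m Hm) as Hsm.
  split; [apply Rdiv_le_0_compat; lra|]. split; [apply Rdiv_le_0_compat; lra|]. split.
  - intros t Ht. pose proof (Hf t Ht). rewrite Rabs_pos_eq by apply sqrt_pos.
    apply sqrt_le_1_alt. pose proof (HB t Ht). rewrite Rabs_pos_eq in H0; lra.
  - intros t s Ht Hs. pose proof (Hf t Ht); pose proof (Hf s Hs).
    assert (St : sqrt m <= sqrt (f t)) by (apply sqrt_le_1_alt; lra).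
    assert (Ss : sqrt m <= sqrt (f s)) by (apply sqrt_le_1_alt; lra).
    replace (sqrt (f t) - sqrt (f s)) with ((f t - f s) / (sqrt (f t) + sqrt (f s))).
    2:{ assert (sqrt (f t) * sqrt (f t) = f t) by (apply sqrt_sqrt; lra).
        assert (sqrt (f s) * sqrt (f s) = f s) by (apply sqrt_sqrt; lra).
        field_simplify; [|lra]. rewrite <- H1 at 1. rewrite <- H2 at 1. field. lra. }
    unfold Rdiv at 1. rewrite Rabs_mult, Rabs_inv, (Rabs_pos_eq (sqrt (f t) + sqrt (f s))) by lra.
    pose proof (HL t s Ht Hs).
    replace ((a / (2 * sqrt m) + b / (2 * sqrt m) * l) * Rabs (t - s)) with
      ((a + b * l) * Rabs (t - s) * / (2 * sqrt m)) by (field; lra).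
    apply Rmult_le_compat; auto. apply Rabs_pos. left; apply Rinv_0_lt_compat; lra.
    apply Rinv_le_contravar; lra.
Qed.

Lemma bdd_lip_sin l g a b : 0 <= a -> 0 <= b ->
  (forall t s, 0 <= t -> 0 <= s -> Rabs (g t - g s) <= (a + b * l) * Rabs (t - s)) ->
  bdd_lip l (fun t => sin (g t)) 1 a b.
Proof.
  intros Ha Hb H. split; auto. split; auto. split.
  - intros; apply Rabs_le; pose proof (SIN_bound (g t)); lra.
  - intros t s Ht Hs. eapply Rle_trans; [apply sin_lipschitz|]. auto.
Qed.

Lemma bdd_lip_of_deriv l f f' M B : 0 <= B -> (forall t, 0 <= t -> deriv_nonneg f t (f' t)) ->
  (forall t, 0 <= t -> Rabs (f' t) <= B) -> (forall t, 0 <= t -> Rabs (f t) <= M) ->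
  bdd_lip l f M B 0.
Proof.
  intros HB Hd Hb HM. split; auto. split; [lra|]. split; auto.
  intros t s Ht Hs. replace (B + 0 * l) with B by ring. apply (lipschitz_of_deriv_bound f f'); auto.
Qed.

(* Use the sup bound at scales [h >= 1 / l], the Lipschitz bound below. *)
Lemma holder_quot_bdd_lip l f M a b al t s : 1 <= l -> 0 < al < 1 -> bdd_lip l f M a b ->
  0 <= t -> 0 <= s -> t <> s ->
  Rabs (f t - f s) / Rpower (Rabs (t - s)) al <= Rpower l al * (2 * M + a + b).
Proof.
  intros Hl Hal HL Ht Hs Hts.
  pose proof (bdd_lip_bound_nonneg _ _ _ _ _ HL) as HM. destruct HL as [Ha [Hb [HB HLip]]].
  set (h := Rabs (t - s)).
  assert (Hh : 0 < h) by (unfold h; apply Rabs_pos_lt; lra).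
  set (X := Rabs (f t - f s)).
  assert (HX0 : 0 <= X) by apply Rabs_pos.
  assert (HX1 : X <= 2 * M).
  { unfold X. unfold Rminus. eapply Rle_trans; [apply Rabs_triang|]. rewrite Rabs_Ropp.
    pose proof (HB t Ht); pose proof (HB s Hs). lra. }
  assert (HX2 : X <= (a + b * l) * h) by (apply HLip; auto).
  pose proof (Rpower_pos h al) as Hha. pose proof (Rpower_pos l al) as Hla.
  assert (Hab : 0 <= 2 * M + a + b) by lra.
  destruct (Rle_lt_dec (/ l) h) as [H1|H1].
  - assert (Hp : / Rpower l al <= Rpower h al).
    { rewrite <- Rpower_inv by lra. apply Rle_Rpower_l; [lra|].
      split; [apply Rinv_0_lt_compat; lra|auto]. }
    apply (Rle_trans _ (2 * M * Rpower l al)).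
    + unfold Rdiv. apply (Rle_trans _ (2 * M * / Rpower h al)).
      * apply Rmult_le_compat_r; [left; apply Rinv_0_lt_compat|]; lra.
      * apply Rmult_le_compat_l; [lra|]. rewrite <- (Rinv_inv (Rpower l al)).
        apply Rinv_le_contravar; auto. apply Rinv_0_lt_compat; lra.
    + rewrite Rmult_comm. apply Rmult_le_compat_l; lra.
  - assert (Hp : Rpower h (1 - al) <= / Rpower l (1 - al)).
    { rewrite <- Rpower_inv by lra. apply Rle_Rpower_l; lra. }
    assert (Hl1 : Rpower l (1 - al) = l / Rpower l al) by (rewrite Rpower_div; auto; lra).
    apply (Rle_trans _ ((a + b * l) * Rpower h (1 - al))).
    + rewrite <- Rpower_div by auto. unfold Rdiv. rewrite <- Rmult_assoc.
      apply Rmult_le_compat_r; [left; apply Rinv_0_lt_compat; lra|auto].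
    + apply (Rle_trans _ ((a + b * l) * / Rpower l (1 - al))).
      * apply Rmult_le_compat_l; [nra|auto].
      * rewrite Hl1. replace ((a + b * l) * / (l / Rpower l al))
          with (Rpower l al * (a / l + b)) by (field; lra).
        apply Rmult_le_compat_l; [lra|].
        assert (a / l <= a).
        { unfold Rdiv. rewrite <- (Rmult_1_r a) at 2. apply Rmult_le_compat_l; auto.
          rewrite <- Rinv_1. apply Rinv_le_contravar; lra. }
        lra.
Qed.

Lemma holder_interp X A0 B0 h al : 0 <= X -> 0 < A0 -> 0 < B0 -> 0 < h -> 0 < al < 1 ->
  X <= A0 -> X <= B0 * h -> X / Rpower h al <= Rpower A0 (1 - al) * Rpower B0 al.
Proof.
  intros HX HA HB Hh Hal H1 H2.
  pose proof (Rpower_pos h al) as Hha.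
  destruct (Rle_lt_or_eq_dec 0 X HX) as [HXp|HX0].
  - assert (HXe : X = Rpower X (1 - al) * Rpower X al).
    { rewrite <- Rpower_plus. replace (1 - al + al) with 1 by ring. rewrite Rpower_1; auto. }
    assert (E1 : Rpower X (1 - al) <= Rpower A0 (1 - al)) by (apply Rle_Rpower_l; lra).
    assert (E2 : Rpower X al <= Rpower (B0 * h) al) by (apply Rle_Rpower_l; [lra|]; split; auto).
    rewrite <- Rpower_mult_distr in E2 by auto.
    pose proof (Rpower_pos X (1 - al)). pose proof (Rpower_pos X al).
    pose proof (Rpower_pos B0 al).
    apply (Rmult_le_reg_r (Rpower h al)); auto.
    replace (X / Rpower h al * Rpower h al) with X by (field; lra).
    rewrite HXe at 1. rewrite Rmult_assoc. apply Rmult_le_compat; lra.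
  - rewrite <- HX0. unfold Rdiv. rewrite Rmult_0_l.
    apply Rmult_le_pos; left; apply Rpower_pos.
Qed.

(* The corrections multiplying [eps^2], [1 / lam^2] and [eps / lam] in [gamma],
   written as products so that the [bdd_lip] rules apply syntactically. *)
Definition corr_eps2 (c0 A : R -> R) l t :=
  -1/4 * ((sin (l * A t) * (sin (l * A t) * (sin (l * A t) * sin (l * A t)))) * (1 / c0 t)).
Definition corr_lam2 (c0 c1 c2 : R -> R) t :=
  -5/16 * ((c1 t * (1 / c0 t)) * (c1 t * (1 / c0 t))) + 1/4 * (c2 t * (1 / c0 t)).
Definition corr_mixed (c0 c1 A : R -> R) l t :=
  1/2 * ((c1 t * (1 / (c0 t * sqrt (c0 t)))) * (sin (l * A t) * sin (l * A t))).

Lemma corrections_bdd_lip (mu1 mu2 K : R) (c0 c1 c2 c3 A : R -> R)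
  (Hmu1 : 0 < mu1)
  (Hc1 : forall t, 0 <= t -> deriv_nonneg c0 t (c1 t))
  (Hc2 : forall t, 0 <= t -> deriv_nonneg c1 t (c2 t))
  (Hc3 : forall t, 0 <= t -> deriv_nonneg c2 t (c3 t))
  (HA : forall t, 0 <= t -> deriv_nonneg A t (sqrt (c0 t)))
  (Hbnd : forall t, 0 <= t -> mu1 <= c0 t <= mu2)
  (HK1 : forall t, 0 <= t -> Rabs (c1 t) <= K)
  (HK2 : forall t, 0 <= t -> Rabs (c2 t) <= K)
  (HK3 : forall t, 0 <= t -> Rabs (c3 t) <= K) :
  exists M1 a1 b1 M2 a2 b2 M3 a3 b3, forall l, 0 <= l ->
    bdd_lip l (corr_eps2 c0 A l) M1 a1 b1 /\ bdd_lip l (corr_lam2 c0 c1 c2) M2 a2 b2 /\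
    bdd_lip l (corr_mixed c0 c1 A l) M3 a3 b3.
Proof.
  assert (HK : 0 <= K) by (pose proof (HK1 0 (Rle_refl 0)); pose proof (Rabs_pos (c1 0)); lra).
  assert (Hmu2 : 0 < mu2) by (pose proof (Hbnd 0 (Rle_refl 0)); lra).
  pose proof (sqrt_lt_R0 mu1 Hmu1) as Hs1.
  pose proof (sqrt_lt_R0 mu2 Hmu2) as Hs2.
  assert (Lc0 : forall l, bdd_lip l c0 mu2 K 0).
  { intros l. apply (bdd_lip_of_deriv l c0 c1); auto. intros t Ht. pose proof (Hbnd t Ht).
    rewrite Rabs_pos_eq; lra. }
  assert (Lc1 : forall l, bdd_lip l c1 K K 0).
  { intros l. apply (bdd_lip_of_deriv l c1 c2); auto. }
  assert (Lc2 : forall l, bdd_lip l c2 K K 0).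
  { intros l. apply (bdd_lip_of_deriv l c2 c3); auto. }
  assert (LS : forall l, 0 <= l -> bdd_lip l (fun t => sin (l * A t)) 1 0 (sqrt mu2)).
  { intros l Hl. apply bdd_lip_sin; [lra|lra|]. intros t s Ht Hs.
    replace (l * A t - l * A s) with (l * (A t - A s)) by ring.
    rewrite Rabs_mult, Rabs_pos_eq by lra.
    pose proof (lipschitz_of_deriv_bound A (fun t => sqrt (c0 t)) (sqrt mu2) HA) as HL.
    assert (Rabs (A t - A s) <= sqrt mu2 * Rabs (t - s)).
    { apply HL; auto. intros u Hu. rewrite Rabs_pos_eq by apply sqrt_pos.
      apply sqrt_le_1_alt. pose proof (Hbnd u Hu); lra. }
    replace ((0 + sqrt mu2 * l) * Rabs (t - s)) with (l * (sqrt mu2 * Rabs (t - s))) by ring.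
    apply Rmult_le_compat_l; auto. }
  assert (Lic0 : forall l, bdd_lip l (fun t => 1 / c0 t) (1 / mu1) (K / mu1 ^ 2) (0 / mu1 ^ 2)).
  { intros l. eapply bdd_lip_inv; [auto | | apply (Lc0 l)].
    intros t Ht; pose proof (Hbnd t Ht); lra. }
  assert (Lsq : forall l, bdd_lip l (fun t => sqrt (c0 t)) (sqrt mu2) (K / (2 * sqrt mu1))
                                  (0 / (2 * sqrt mu1))).
  { intros l. eapply bdd_lip_sqrt; [auto | | apply (Lc0 l)].
    intros t Ht; pose proof (Hbnd t Ht); lra. }
  do 9 eexists. intros l Hl. split; [|split].
  - unfold corr_eps2. apply bdd_lip_scal. apply bdd_lip_mult; auto.
    apply bdd_lip_mult; auto. apply bdd_lip_mult; auto. apply bdd_lip_mult; auto.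
  - unfold corr_lam2. apply bdd_lip_plus; apply bdd_lip_scal.
    + apply bdd_lip_mult; auto; apply bdd_lip_mult; auto.
    + apply bdd_lip_mult; auto.
  - unfold corr_mixed. apply bdd_lip_scal. apply bdd_lip_mult; auto.
    + apply bdd_lip_mult; auto. eapply (bdd_lip_inv l _ (mu1 * sqrt mu1)).
      * apply Rmult_lt_0_compat; auto.
      * intros t Ht. pose proof (Hbnd t Ht).
        apply Rmult_le_compat; try lra. apply sqrt_le_1_alt; lra.
      * apply bdd_lip_mult; auto.
    + apply bdd_lip_mult; auto.
Qed.

Lemma gamma_decomp (c0 c1 c2 A : R -> R) delta sigma e l t : 0 < l -> 0 < c0 t ->
  gamma c0 c1 c2 A delta sigma e l t =
  c0 t - e * sin (2 * (l * A t))
  + (e ^ 2 * corr_eps2 c0 A l t + corr_lam2 c0 c1 c2 t / l ^ 2 + e / l * corr_mixed c0 c1 A l t)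
  + delta ^ 2 / Rpower l (2 - 4 * sigma).
Proof.
  intros Hl Hc. unfold gamma, corr_eps2, corr_lam2, corr_mixed. cbv zeta.
  pose proof (sqrt_lt_R0 _ Hc). pose proof (Rpower_pos l (2 - 4 * sigma)).
  field. repeat split; apply Rgt_not_eq; lra.
Qed.

Lemma holder_quot_sin_phase l mu2 A t s al : 0 < l -> 0 < mu2 -> 0 < al < 1 -> t <> s ->
  Rabs (A t - A s) <= sqrt mu2 * Rabs (t - s) ->
  Rabs (sin (2 * (l * A t)) - sin (2 * (l * A s))) / Rpower (Rabs (t - s)) al <=
  2 * Rpower mu2 (al / 2) * Rpower l al.
Proof.
  intros Hl Hm Hal Hts HA.
  pose proof (sqrt_lt_R0 mu2 Hm) as Hs.
  assert (Hh : 0 < Rabs (t - s)) by (apply Rabs_pos_lt; lra).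
  eapply Rle_trans. apply (holder_interp _ 2 (2 * l * sqrt mu2)); auto.
  - apply Rabs_pos.
  - lra.
  - apply Rmult_lt_0_compat; lra.
  - unfold Rminus. eapply Rle_trans; [apply Rabs_triang|]. rewrite Rabs_Ropp.
    pose proof (SIN_bound (2 * (l * A t))). pose proof (SIN_bound (2 * (l * A s))).
    assert (Rabs (sin (2 * (l * A t))) <= 1) by (apply Rabs_le; lra).
    assert (Rabs (sin (2 * (l * A s))) <= 1) by (apply Rabs_le; lra). lra.
  - eapply Rle_trans; [apply sin_lipschitz|].
    replace (2 * (l * A t) - 2 * (l * A s)) with ((2 * l) * (A t - A s)) by ring.
    rewrite Rabs_mult, (Rabs_pos_eq (2 * l)) by lra.
    replace (2 * l * sqrt mu2 * Rabs (t - s)) with ((2 * l) * (sqrt mu2 * Rabs (t - s))) by ring.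
    apply Rmult_le_compat_l; lra.
  - right. rewrite <- !Rpower_mult_distr by (try apply Rmult_lt_0_compat; lra).
    rewrite <- Rpower_sqrt, Rpower_mult by lra.
    replace (/ 2 * al) with (al / 2) by field.
    replace (Rpower 2 (1 - al) * (Rpower 2 al * Rpower l al * Rpower mu2 (al / 2)))
      with ((Rpower 2 (1 - al) * Rpower 2 al) * Rpower mu2 (al / 2) * Rpower l al) by ring.
    rewrite <- Rpower_plus. replace (1 - al + al) with 1 by ring. rewrite Rpower_1 by lra. ring.
Qed.

Lemma corrections_holder mu1 mu2 alpha K (c0 c1 c2 c3 A : R -> R) :
  0 < mu1 -> 0 < alpha < 1 ->
  (forall t, 0 <= t -> deriv_nonneg c0 t (c1 t)) ->
  (forall t, 0 <= t -> deriv_nonneg c1 t (c2 t)) ->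
  (forall t, 0 <= t -> deriv_nonneg c2 t (c3 t)) ->
  (forall t, 0 <= t -> deriv_nonneg A t (sqrt (c0 t))) ->
  (forall t, 0 <= t -> mu1 <= c0 t <= mu2) ->
  (forall t, 0 <= t -> Rabs (c1 t) <= K) -> (forall t, 0 <= t -> Rabs (c2 t) <= K) ->
  (forall t, 0 <= t -> Rabs (c3 t) <= K) ->
  exists C, 0 <= C /\ forall l t s, 1 <= l -> 0 <= t -> 0 <= s -> t <> s ->
    Rabs (corr_eps2 c0 A l t - corr_eps2 c0 A l s) / Rpower (Rabs (t - s)) alpha
      <= Rpower l alpha * C /\
    Rabs (corr_lam2 c0 c1 c2 t - corr_lam2 c0 c1 c2 s) / Rpower (Rabs (t - s)) alpha
      <= Rpower l alpha * C /\
    Rabs (corr_mixed c0 c1 A l t - corr_mixed c0 c1 A l s) / Rpower (Rabs (t - s)) alpha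
      <= Rpower l alpha * C.
Proof.
  intros Hmu1 Halpha Hc1 Hc2 Hc3 HA Hbnd HK1 HK2 HK3.
  destruct (corrections_bdd_lip mu1 mu2 K c0 c1 c2 c3 A Hmu1 Hc1 Hc2 Hc3 HA Hbnd HK1 HK2 HK3)
    as [M1 [a1 [b1 [M2 [a2 [b2 [M3 [a3 [b3 HU]]]]]]]]].
  destruct (HU 0 (Rle_refl 0)) as [HU1 [HU2 HU3]].
  pose proof (bdd_lip_bound_nonneg _ _ _ _ _ HU1).
  pose proof (bdd_lip_bound_nonneg _ _ _ _ _ HU2).
  pose proof (bdd_lip_bound_nonneg _ _ _ _ _ HU3).
  destruct HU1 as [? [? _]], HU2 as [? [? _]], HU3 as [? [? _]].
  exists ((2 * M1 + a1 + b1) + (2 * M2 + a2 + b2) + (2 * M3 + a3 + b3)). split; [lra|].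
  intros l t s Hl Ht Hs Hts. destruct (HU l ltac:(lra)) as [LU1 [LU2 LU3]].
  pose proof (Rpower_pos l alpha).
  repeat split; (eapply Rle_trans; [eapply holder_quot_bdd_lip; eauto|];
    apply Rmult_le_compat_l; lra).
Qed.

Lemma gamma_holder_quot_le (c0 c1 c2 A : R -> R) delta sigma alpha C e l t s :
  0 <= e -> 1 <= l -> 0 < c0 t -> 0 < c0 s -> t <> s ->
  Rabs (corr_eps2 c0 A l t - corr_eps2 c0 A l s) / Rpower (Rabs (t - s)) alpha
    <= Rpower l alpha * C ->
  Rabs (corr_lam2 c0 c1 c2 t - corr_lam2 c0 c1 c2 s) / Rpower (Rabs (t - s)) alpha
    <= Rpower l alpha * C ->
  Rabs (corr_mixed c0 c1 A l t - corr_mixed c0 c1 A l s) / Rpower (Rabs (t - s)) alpha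
    <= Rpower l alpha * C ->
  Rabs (gamma c0 c1 c2 A delta sigma e l t - gamma c0 c1 c2 A delta sigma e l s)
    / Rpower (Rabs (t - s)) alpha <=
  Rabs (c0 t - c0 s) / Rpower (Rabs (t - s)) alpha
  + e * (Rabs (sin (2 * (l * A t)) - sin (2 * (l * A s))) / Rpower (Rabs (t - s)) alpha)
  + Rpower l alpha * C * (e ^ 2 + / l ^ 2 + e / l).
Proof.
  intros He Hl Hct Hcs Hts H1 H2 H3.
  set (ha := Rpower (Rabs (t - s)) alpha) in *.
  assert (Hha : 0 < ha) by apply Rpower_pos.
  assert (Hl2 : 0 < / l ^ 2) by (apply Rinv_0_lt_compat, pow_lt; lra).
  assert (Hel : 0 <= e / l) by (apply Rdiv_le_0_compat; lra).
  replace (gamma c0 c1 c2 A delta sigma e l t - gamma c0 c1 c2 A delta sigma e l s) with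
    ((c0 t - c0 s) + - e * (sin (2 * (l * A t)) - sin (2 * (l * A s)))
     + (e ^ 2 * (corr_eps2 c0 A l t - corr_eps2 c0 A l s)
        + / l ^ 2 * (corr_lam2 c0 c1 c2 t - corr_lam2 c0 c1 c2 s)
        + e / l * (corr_mixed c0 c1 A l t - corr_mixed c0 c1 A l s)))
    by (rewrite !gamma_decomp by lra; pose proof (Rpower_pos l (2 - 4 * sigma));
        field; split; apply Rgt_not_eq; lra).
  set (X0 := c0 t - c0 s). set (Xs := sin (2 * (l * A t)) - sin (2 * (l * A s))).
  set (X1 := corr_eps2 c0 A l t - corr_eps2 c0 A l s) in *.
  set (X2 := corr_lam2 c0 c1 c2 t - corr_lam2 c0 c1 c2 s) in *.
  set (X3 := corr_mixed c0 c1 A l t - corr_mixed c0 c1 A l s) in *.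
  assert (Habs : Rabs (X0 + - e * Xs + (e ^ 2 * X1 + / l ^ 2 * X2 + e / l * X3)) <=
          Rabs X0 + e * Rabs Xs + (e ^ 2 * Rabs X1 + / l ^ 2 * Rabs X2 + e / l * Rabs X3)).
  { pose proof (Rabs_triang (X0 + - e * Xs) (e ^ 2 * X1 + / l ^ 2 * X2 + e / l * X3)).
    pose proof (Rabs_triang X0 (- e * Xs)).
    pose proof (Rabs_triang (e ^ 2 * X1 + / l ^ 2 * X2) (e / l * X3)).
    pose proof (Rabs_triang (e ^ 2 * X1) (/ l ^ 2 * X2)).
    rewrite !Rabs_mult, Rabs_Ropp in *.
    rewrite (Rabs_pos_eq e), (Rabs_pos_eq (e ^ 2)), (Rabs_pos_eq (/ l ^ 2)), (Rabs_pos_eq (e / l))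
      in * by (apply pow2_ge_0 || lra).
    lra. }
  apply (Rle_div_l _ _ _ Hha) in H1, H2, H3.
  set (B := Rpower l alpha * C * ha) in *.
  assert (e ^ 2 * Rabs X1 <= e ^ 2 * B) by (apply Rmult_le_compat_l; [apply pow2_ge_0|lra]).
  assert (/ l ^ 2 * Rabs X2 <= / l ^ 2 * B) by (apply Rmult_le_compat_l; lra).
  assert (e / l * Rabs X3 <= e / l * B) by (apply Rmult_le_compat_l; lra).
  replace (Rabs X0 / ha + e * (Rabs Xs / ha) + Rpower l alpha * C * (e ^ 2 + / l ^ 2 + e / l))
    with ((Rabs X0 + e * Rabs Xs + (e ^ 2 * B + / l ^ 2 * B + e / l * B)) / ha)
    by (unfold B; field; split; lra).
  apply Rmult_le_compat_r; [left; apply Rinv_0_lt_compat; lra|]. lra.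
Qed.

Lemma le_half_of_le_div e y x : 0 <= y -> 0 < x -> e <= x / (2 * (y + 1)) -> e * y <= x / 2.
Proof.
  intros Hy Hx He. apply (Rle_trans _ (x / (2 * (y + 1)) * y)); [apply Rmult_le_compat_r; lra|].
  apply (Rmult_le_reg_r (2 * (y + 1))); [lra|].
  replace (x / (2 * (y + 1)) * y * (2 * (y + 1))) with (x * y) by (field; lra).
  nra.
Qed.

Lemma holder_remainder_le la C e l B : 0 <= C -> 0 <= e -> 1 <= l -> 0 < la <= l ->
  e * la <= B -> la * C * (e ^ 2 + / l ^ 2 + e / l) <= C * (e * B + e + / l).
Proof.
  intros HC He Hl Hla HB.
  assert (la * e ^ 2 <= e * B) by (replace (la * e ^ 2) with (e * (e * la)) by ring;
    apply Rmult_le_compat_l; lra).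
  assert (la * / l ^ 2 <= / l).
  { replace (/ l) with (l * / l ^ 2) by (field; lra).
    apply Rmult_le_compat_r; [left; apply Rinv_0_lt_compat, pow_lt|]; lra. }
  assert (la * (e / l) <= e).
  { replace (la * (e / l)) with (e * (la / l)) by (field; lra).
    rewrite <- (Rmult_1_r e) at 2. apply Rmult_le_compat_l; [lra|].
    apply Rle_div_l; lra. }
  replace (la * C * (e ^ 2 + / l ^ 2 + e / l))
    with (C * (la * e ^ 2 + la * / l ^ 2 + la * (e / l))) by ring.
  apply Rmult_le_compat_l; lra.
Qed.

(* Split at the scale [h0]: below it [c0] is Lipschitz, above it the
   oscillating term has a small quotient. *)
Lemma two_scale_bound q0 qs e h h0 alpha H0 K m la L eta' eta4 :
  0 < alpha < 1 -> 0 < h -> 0 < h0 -> 0 <= e -> 0 <= K -> 0 < m ->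
  q0 <= H0 -> q0 <= K * Rpower h (1 - alpha) ->
  qs <= 2 * m * la -> qs <= 2 / Rpower h alpha ->
  e * la <= L + eta' -> 2 * m * eta' <= eta4 ->
  K * Rpower h0 (1 - alpha) <= eta4 -> e * (2 / Rpower h0 alpha) <= eta4 ->
  q0 + e * qs <= Rmax H0 (2 * m * L) + 2 * eta4.
Proof.
  intros Hal Hh Hh0 He HK Hm Hq0H Hq0K Hqs1 Hqs2 HeL Heta' HKh0 Heh0.
  pose proof (Rmax_l H0 (2 * m * L)). pose proof (Rmax_r H0 (2 * m * L)).
  destruct (Rle_lt_dec h h0) as [Hc|Hc].
  - assert (K * Rpower h (1 - alpha) <= K * Rpower h0 (1 - alpha)).
    { apply Rmult_le_compat_l; [lra|]. apply Rle_Rpower_l; lra. }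
    assert (e * qs <= 2 * m * (e * la)).
    { replace (2 * m * (e * la)) with (e * (2 * m * la)) by ring.
      apply Rmult_le_compat_l; lra. }
    assert (2 * m * (e * la) <= 2 * m * (L + eta')) by (apply Rmult_le_compat_l; lra).
    lra.
  - assert (e * qs <= e * (2 / Rpower h0 alpha)).
    { apply Rmult_le_compat_l; [lra|]. apply (Rle_trans _ (2 / Rpower h alpha)); auto.
      apply Rmult_le_compat_l; [lra|]. apply Rinv_le_contravar; [apply Rpower_pos|].
      apply Rle_Rpower_l; lra. }
    pose proof (Rpower_pos h alpha). pose proof (Rpower_pos h0 alpha).
    assert (0 <= eta4).
    { eapply Rle_trans; [|exact Heh0]. apply Rmult_le_pos; [lra|].
      apply Rdiv_le_0_compat; lra. }
    lra.
Qed.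

Lemma gamma_holder_quot_bound mu1 mu2 alpha delta sigma K C H0 L B eta' eta4 h0
  (c0 c1 c2 A : R -> R) e l t s :
  0 < mu1 -> 0 < alpha < 1 ->
  (forall t, 0 <= t -> deriv_nonneg c0 t (c1 t)) ->
  (forall t, 0 <= t -> deriv_nonneg A t (sqrt (c0 t))) ->
  (forall t, 0 <= t -> mu1 <= c0 t <= mu2) -> (forall t, 0 <= t -> Rabs (c1 t) <= K) ->
  is_lub (Hold_set alpha c0) H0 -> 0 <= C ->
  0 <= e -> 1 <= l -> 0 <= t -> 0 <= s -> t <> s ->
  Rabs (corr_eps2 c0 A l t - corr_eps2 c0 A l s) / Rpower (Rabs (t - s)) alpha
    <= Rpower l alpha * C ->
  Rabs (corr_lam2 c0 c1 c2 t - corr_lam2 c0 c1 c2 s) / Rpower (Rabs (t - s)) alpha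
    <= Rpower l alpha * C ->
  Rabs (corr_mixed c0 c1 A l t - corr_mixed c0 c1 A l s) / Rpower (Rabs (t - s)) alpha
    <= Rpower l alpha * C ->
  e * Rpower l alpha <= L + eta' -> L + eta' <= B ->
  2 * Rpower mu2 (alpha / 2) * eta' <= eta4 -> C * (e * B + e + / l) <= eta4 ->
  0 < h0 -> K * Rpower h0 (1 - alpha) <= eta4 -> e * (2 / Rpower h0 alpha) <= eta4 ->
  Rabs (gamma c0 c1 c2 A delta sigma e l t - gamma c0 c1 c2 A delta sigma e l s)
    / Rpower (Rabs (t - s)) alpha <= Rmax H0 (2 * Rpower mu2 (alpha / 2) * L) + 3 * eta4.
Proof.
  intros Hmu1 Halpha Hc1 HA Hbnd HK1 HH0 HC He Hl Ht Hs Hts Hq1 Hq2 Hq3 HeL HB Hmeta' HCr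
    Hh0 HKh0 Heh0.
  assert (HK : 0 <= K) by (pose proof (HK1 0 (Rle_refl 0)); pose proof (Rabs_pos (c1 0)); lra).
  assert (Hmu2 : 0 < mu2) by (pose proof (Hbnd 0 (Rle_refl 0)); lra).
  pose proof (Hbnd t Ht). pose proof (Hbnd s Hs).
  set (h := Rabs (t - s)) in *. assert (Hh : 0 < h) by (apply Rabs_pos_lt; lra).
  set (la := Rpower l alpha) in *.
  assert (Hla : 0 < la <= l).
  { split; [apply Rpower_pos|]. unfold la. rewrite <- (Rpower_1 l) at 2 by lra.
    apply Rle_Rpower; lra. }
  eapply Rle_trans; [apply (gamma_holder_quot_le c0 c1 c2 A delta sigma alpha C e l t s);
    auto; lra|].
  fold h la.
  assert (HR : la * C * (e ^ 2 + / l ^ 2 + e / l) <= eta4).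
  { eapply Rle_trans; [apply (holder_remainder_le la C e l B); auto; lra|]. lra. }
  assert (HA' : forall u v, 0 <= u -> 0 <= v -> Rabs (A u - A v) <= sqrt mu2 * Rabs (u - v)).
  { apply (lipschitz_of_deriv_bound A (fun t => sqrt (c0 t))); auto. intros u Hu.
    rewrite Rabs_pos_eq by apply sqrt_pos. apply sqrt_le_1_alt. pose proof (Hbnd u Hu); lra. }
  assert (Hmain : Rabs (c0 t - c0 s) / Rpower h alpha
    + e * (Rabs (sin (2 * (l * A t)) - sin (2 * (l * A s))) / Rpower h alpha)
    <= Rmax H0 (2 * Rpower mu2 (alpha / 2) * L) + 2 * eta4).
  { apply (two_scale_bound _ _ e h h0 alpha H0 K _ la L eta' eta4); auto; try lra;
      try apply Rpower_pos.
    - destruct HH0 as [Hub _]. apply Hub. exists t, s. repeat split; auto.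
    - rewrite <- Rpower_div by auto. unfold Rdiv. rewrite <- Rmult_assoc.
      apply Rmult_le_compat_r; [left; apply Rinv_0_lt_compat, Rpower_pos|].
      apply (lipschitz_of_deriv_bound c0 c1); auto.
    - apply holder_quot_sin_phase; auto; lra.
    - apply Rmult_le_compat_r; [left; apply Rinv_0_lt_compat, Rpower_pos|].
      unfold Rminus. eapply Rle_trans; [apply Rabs_triang|]. rewrite Rabs_Ropp.
      pose proof (Rabs_sin_le (2 * (l * A t))). pose proof (Rabs_sin_le (2 * (l * A s))). lra. }
  lra.
Qed.

Lemma gamma_holder_limsup mu1 mu2 alpha delta sigma K (c0 c1 c2 c3 A : R -> R)
  (lam eps : nat -> R) :
  0 < mu1 -> 0 < alpha < 1 ->
  (forall t, 0 <= t -> deriv_nonneg c0 t (c1 t)) ->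
  (forall t, 0 <= t -> deriv_nonneg c1 t (c2 t)) ->
  (forall t, 0 <= t -> deriv_nonneg c2 t (c3 t)) ->
  (forall t, 0 <= t -> deriv_nonneg A t (sqrt (c0 t))) ->
  (forall t, 0 <= t -> mu1 <= c0 t <= mu2) ->
  (forall t, 0 <= t -> Rabs (c1 t) <= K) -> (forall t, 0 <= t -> Rabs (c2 t) <= K) ->
  (forall t, 0 <= t -> Rabs (c3 t) <= K) ->
  (forall n, 0 < lam n) -> (forall n, 0 < eps n) -> cv_infty lam -> Un_cv eps 0 ->
  forall H0 L, is_lub (Hold_set alpha c0) H0 ->
    is_limsup (fun n => eps n * Rpower (lam n) alpha) L ->
    forall eta, 0 < eta -> eventually (fun n => forall x,
      Hold_set alpha (fun t => gamma c0 c1 c2 A delta sigma (eps n) (lam n) t) x ->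
      x <= Rmax H0 (2 * Rpower mu2 (alpha / 2) * L) + eta).
Proof.
  intros Hmu1 Halpha Hc1 Hc2 Hc3 HA Hbnd HK1 HK2 HK3 Hlam Heps Hlaminf Heps0
    H0 L HH0 HL eta Heta.
  assert (HK : 0 <= K) by (pose proof (HK1 0 (Rle_refl 0)); pose proof (Rabs_pos (c1 0)); lra).
  destruct (corrections_holder mu1 mu2 alpha K c0 c1 c2 c3 A Hmu1 Halpha Hc1 Hc2 Hc3 HA Hbnd
    HK1 HK2 HK3) as [C [HC HCq]].
  set (eta4 := eta / 4).
  assert (Heta4 : 0 < eta4) by (unfold eta4; lra).
  set (h0 := Rpower (eta4 / (K + 1)) (1 / (1 - alpha))).
  assert (Hh0 : 0 < h0) by apply Rpower_pos.
  assert (HKh0 : K * Rpower h0 (1 - alpha) <= eta4).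
  { unfold h0. rewrite Rpower_root; [|apply Rdiv_lt_0_compat; lra|lra].
    apply (Rmult_le_reg_r (K + 1)); [lra|].
    replace (K * (eta4 / (K + 1)) * (K + 1)) with (K * eta4) by (field; lra). nra. }
  set (m := Rpower mu2 (alpha / 2)).
  assert (Hm : 0 < m) by apply Rpower_pos.
  set (eta' := Rmin 1 (eta4 / (2 * (2 * m + 1)))).
  assert (Heta' : 0 < eta') by (apply Rmin_pos; [lra|]; apply Rdiv_lt_0_compat; lra).
  assert (Hmeta' : 2 * m * eta' <= eta4).
  { assert (eta' <= eta4 / (2 * (2 * m + 1))) by apply Rmin_r.
    assert (eta' * (2 * m) <= eta4 / 2) by (apply le_half_of_le_div; lra). lra. }
  set (B := Rabs L + 1).
  assert (HB : L + eta' <= B).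
  { assert (eta' <= 1) by apply Rmin_l. pose proof (Rle_abs L). unfold B; lra. }
  assert (HCB : 0 <= C * (B + 1))
    by (apply Rmult_le_pos; [|unfold B; pose proof (Rabs_pos L)]; lra).
  set (e1 := Rmin (eta4 / (2 * (C * (B + 1) + 1))) (eta4 * Rpower h0 alpha / 2)).
  assert (He1 : 0 < e1).
  { pose proof (Rpower_pos h0 alpha). apply Rmin_pos; apply Rdiv_lt_0_compat; nra. }
  destruct (HL eta' Heta') as [HLe _].
  destruct (eventually_and _ _ HLe (eventually_and _ _
    (eventually_gt lam (2 * C / eta4 + 1) Hlaminf) (eventually_lt eps e1 Heps0 He1 Heps)))
    as [N HN].
  exists N. intros n Hn x [t [s [Ht [Hs [Hts ->]]]]].
  destruct (HN n Hn) as [HeL [Hl He]].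
  pose proof (Hlam n). pose proof (Heps n).
  assert (0 <= 2 * C / eta4) by (apply Rdiv_le_0_compat; lra).
  destruct (HCq (lam n) t s ltac:(lra) Ht Hs Hts) as [Hq1 [Hq2 Hq3]].
  apply (Rle_trans _ (Rmax H0 (2 * m * L) + 3 * eta4)); [|unfold eta4; lra].
  apply (gamma_holder_quot_bound mu1 mu2 alpha delta sigma K C H0 L B eta' eta4 h0 c0 c1 c2 A);
    auto; try lra.
  - assert (e1 <= eta4 / (2 * (C * (B + 1) + 1))) by apply Rmin_l.
    assert (eps n * (C * (B + 1)) <= eta4 / 2) by (apply le_half_of_le_div; lra).
    assert (C * / lam n <= eta4 / 2).
    { apply (Rmult_le_reg_r (lam n)); [lra|]. replace (C * / lam n * lam n) with C by (field; lra).
      assert (2 * C / eta4 * eta4 = 2 * C) by (field; lra). nra. }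
    nra.
  - assert (e1 <= eta4 * Rpower h0 alpha / 2) by apply Rmin_r.
    pose proof (Rpower_pos h0 alpha).
    replace (eps n * (2 / Rpower h0 alpha)) with (2 * eps n / Rpower h0 alpha) by (field; lra).
    apply Rle_div_l; lra.
Qed.

Theorem mainTheorem8
  (mu1 mu2 alpha delta sigma : R)
  (c0 c1 c2 c3 A : R -> R)
  (lam eps : nat -> R)
  (w w1 : nat -> R -> R)
  (Hmu1 : 0 < mu1) (Hmu12 : mu1 < mu2)
  (Halpha : 0 < alpha < 1) (Hdelta : 0 <= delta) (Hsigma : 0 < sigma < 1 / 2)
  (* c0 is C^3 on [0,+oo) with derivatives c1, c2, c3 *)
  (Hc1 : forall t, 0 <= t -> deriv_nonneg c0 t (c1 t))
  (Hc2 : forall t, 0 <= t -> deriv_nonneg c1 t (c2 t))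
  (Hc3 : forall t, 0 <= t -> deriv_nonneg c2 t (c3 t))
  (Hc3cont : forall t, 0 <= t -> cont_nonneg c3 t)
  (Hbnd : forall t, 0 <= t -> mu1 <= c0 t <= mu2)
  (Hderbnd : exists K, forall t, 0 <= t ->
      Rabs (c1 t) + Rabs (c2 t) + Rabs (c3 t) <= K)
  (* A t = int_0^t c0(s)^{1/2} ds *)
  (HA0 : A 0 = 0)
  (HA : forall t, 0 <= t -> deriv_nonneg A t (sqrt (c0 t)))
  (Hlam : forall n, 0 < lam n) (Heps : forall n, 0 < eps n)
  (Hlaminf : cv_infty lam) (Heps0 : Un_cv eps 0)
  (Hlimsup : exists M : R, exists N : nat, forall n, (N <= n)%nat ->
      eps n * Rpower (lam n) alpha <= M)
  (* w n solves the ODE on [0,+oo), w1 n = (w n)' *)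
  (Hw : forall n t, 0 <= t -> deriv_nonneg (w n) t (w1 n t))
  (Hw1 : forall n t, 0 <= t -> deriv_nonneg (w1 n) t
      (- (2 * delta * Rpower (lam n) (2 * sigma) * w1 n t
          + lam n ^ 2 * gamma c0 c1 c2 A delta sigma (eps n) (lam n) t * w n t)))
  (Hw0 : forall n, w n 0 = 0) (Hw10 : forall n, w1 n 0 = 1) :
  let c := fun n t => gamma c0 c1 c2 A delta sigma (eps n) (lam n) t in
  let mu3 := mu1 * Rmin 1 mu1 / (2 * mu2 ^ 2) in
  let mu4 := 1 / (4 * sqrt mu2) in
  (* (i) uniform convergence on [0,+oo) *)
  (forall eta, 0 < eta -> exists N : nat, forall n, (N <= n)%nat ->
      forall t, 0 <= t -> Rabs (c n t - c0 t) < eta) /\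
  (* (ii) limsup Hold_alpha(c n) <= max{Hold_alpha(c0), 2 mu2^(alpha/2) L} *)
  (forall H0 L, is_lub (Hold_set alpha c0) H0 ->
      is_limsup (fun n => eps n * Rpower (lam n) alpha) L ->
      forall eta, 0 < eta -> exists N : nat, forall n, (N <= n)%nat ->
        forall x, Hold_set alpha (c n) x ->
          x <= Rmax H0 (2 * Rpower mu2 (alpha / 2) * L) + eta) /\
  (* (iii) energy lower bound for n large *)
  (exists N : nat, forall n, (N <= n)%nat -> forall t, 0 <= t ->
      w1 n t ^ 2 + lam n ^ 2 * w n t ^ 2 >=
      mu3 * exp (mu4 * eps n * lam n * t
                 - 2 * delta * Rpower (lam n) (2 * sigma) * t)).
Proof.
  intros c mu3 mu4.
  destruct Hderbnd as [K HK].
  assert (HK1 : forall t, 0 <= t -> Rabs (c1 t) <= K)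
    by (intros t Ht; pose proof (HK t Ht); pose proof (Rabs_pos (c2 t));
        pose proof (Rabs_pos (c3 t)); lra).
  assert (HK2 : forall t, 0 <= t -> Rabs (c2 t) <= K)
    by (intros t Ht; pose proof (HK t Ht); pose proof (Rabs_pos (c1 t));
        pose proof (Rabs_pos (c3 t)); lra).
  assert (HK3 : forall t, 0 <= t -> Rabs (c3 t) <= K)
    by (intros t Ht; pose proof (HK t Ht); pose proof (Rabs_pos (c1 t));
        pose proof (Rabs_pos (c2 t)); lra).
  split; [|split].
  - exact (gamma_unif_cvg mu1 mu2 delta sigma K c0 c1 c2 A lam eps Hmu1 Hsigma Hbnd HK1 HK2
             Hlam Heps Hlaminf Heps0).
  - exact (gamma_holder_limsup mu1 mu2 alpha delta sigma K c0 c1 c2 c3 A lam eps Hmu1 Halpha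
             Hc1 Hc2 Hc3 HA Hbnd HK1 HK2 HK3 Hlam Heps Hlaminf Heps0).
  - exact (gamma_energy_lower mu1 mu2 delta sigma K c0 c1 c2 A lam eps w w1 Hmu1 Hmu12 Hdelta
             Hsigma Hc1 Hc2 Hbnd HK1 HK2 HA0 HA Hlam Heps Hlaminf Heps0 Hw Hw1 Hw0 Hw10).
Qed.
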